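(* Let $\dot{\mathcal H}$ be the point (bound-state) subspace of the Hydrogen atom Hamiltonian and $\dot H$ the restriction of the Hamiltonian to it, as described in the context. There exists a generic set $\mathcal R\subset\dot{\mathcal H}$ such that for each $|\psi\rangle\in\mathcal R$ and each $0<q<1$, \[D^-_{\mu_{|\psi\rangle}}(q)=0\qquad\text{and}\qquad D^+_{\mu_{|\psi\rangle}}(q)=\tfrac13 .\]
   Context: The Hydrogen atom Hamiltonian is $H=-\Delta-\kappa/|x|$ acting in $\mathrm{L}^2(\mathbb R^3)$, $\kappa>0$ (the unique self-adjoint extension from $C_c^\infty$). Its eigenvalues are $\lambda_n=-\Lambda/n^2$, $n=1,2,\dots$, with $\Lambda=\kappa^2/4$, each of multiplicity $n^2$, with orthonormal eigenfunctions $|n,l,m\rangle$, $l=0,\dots,n-1$, $m=-l,\dots,l$. $\dot{\mathcal H}$ denotes the closed subspace spanned by all $|n,l,m\rangle$, and $\dot H$ the restriction of $H$ to $\dot{\mathcal H}$, so $\dot H\sum a_{n,l,m}|n,l,m\rangle=\sum \lambda_n a_{n,l,m}|n,l,m\rangle$. For $|\psi\rangle=\sum a_{n,l,m}|n,l,m\rangle\in\dot{\mathcal H}$ its spectral measure is $\mu_{|\psi\rangle}=\sum_{n,l,m}|a_{n,l,m}|^2\delta_{\lambda_n}$. For a finite positive Borel measure $\mu$ on $\mathbb R$ and $q>0$, $q\neq1$, set $I_\mu(q,\epsilon)=\int_{\{x:\mu(B(x,\epsilon))>0\}}\mu(B(x,\epsilon))^{q-1}\,d\mu(x)$ with $B(x,\epsilon)=(x-\epsilon,x+\epsilon)$,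 and define the lower and upper generalized fractal dimensions $D^-_\mu(q)=\liminf_{\epsilon\downarrow0}\frac{\ln I_\mu(q,\epsilon)}{(q-1)\ln\epsilon}$, $D^+_\mu(q)=\limsup_{\epsilon\downarrow0}\frac{\ln I_\mu(q,\epsilon)}{(q-1)\ln\epsilon}$. A generic set in a complete metric space is a countable intersection of open dense sets. *)

From Stdlib Require Import Reals.
From Coquelicot Require Import Coquelicot.
Open Scope R_scope.

(* A vector of the point subspace \dot H is given by its coordinates
   a_{n,l,m} in the orthonormal eigenbasis |n,l,m>.  We store the coordinate
   of |n,l,m> at  v n l j  with  j = m + l  (so 0 <= j <= 2l). *)
Definition vec := nat -> nat -> nat -> C.

Definition valid_index (n l j : nat) : Prop := (1 <= n)%nat /\ (l < n)%nat /\ (j <= 2 * l)%nat.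

(* squared norm of the component of v in the eigenspace of lambda_{k+1}
   = sum_{l=0}^{k} sum_{m=-l}^{l} |a_{k+1,l,m}|^2 *)
Definition block (v : vec) (k : nat) : R :=
  sum_n (fun l => sum_n (fun j => Cmod (v (S k) l j) ^ 2) (2 * l)) k.

Definition inH (v : vec) : Prop :=
  (forall n l j, ~ valid_index n l j -> v n l j = 0%C) /\ ex_series (block v).

Definition distH (v w : vec) : R :=
  sqrt (Series (block (fun n l j => Cminus (v n l j) (w n l j)))).

Definition openH (U : vec -> Prop) : Prop :=
  (forall v, U v -> inH v) /\
  forall v, U v -> exists eps, 0 < eps /\ forall w, inH w -> distH v w < eps -> U w.

Definition denseH (U : vec -> Prop) : Prop :=
  forall v, inH v -> forall eps, 0 < eps -> exists w, U w /\ distH v w < eps.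

Definition genericH (S : vec -> Prop) : Prop :=
  exists U : nat -> vec -> Prop,
    (forall k, openH (U k) /\ denseH (U k)) /\
    forall v, S v <-> (inH v /\ forall k, U k v).

Definition lambda (kappa : R) (n : nat) : R := - (kappa ^ 2 / 4) / (INR n ^ 2).

(* spectral measure mu_psi = sum_{n,l,m} |a_{n,l,m}|^2 delta_{lambda_n};
   the mass at lambda_{k+1} is  block psi k. *)
Definition mu_ball (kappa : R) (psi : vec) (x eps : R) : R :=
  Series (fun k => if Rlt_dec (Rabs (lambda kappa (S k) - x)) eps then block psi k else 0).

(* I_mu(q,eps) = \int_{ {x : mu(B(x,eps)) > 0} } mu(B(x,eps))^(q-1) dmu(x),
   written out for the atomic measure mu_psi = sum_k (block psi k) delta_{lambda_{k+1}} *)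
Definition I_mu (kappa : R) (psi : vec) (q eps : R) : R :=
  Series (fun k =>
    block psi k *
    (if Rlt_dec 0 (mu_ball kappa psi (lambda kappa (S k)) eps)
     then Rpower (mu_ball kappa psi (lambda kappa (S k)) eps) (q - 1)
     else 0)).

Definition liminf0 (f : R -> R) : Rbar :=
  Rbar_lub (fun y => exists delta, 0 < delta /\
     y = Rbar_glb (fun z => exists eps, 0 < eps < delta /\ z = Finite (f eps))).
Definition limsup0 (f : R -> R) : Rbar :=
  Rbar_glb (fun y => exists delta, 0 < delta /\
     y = Rbar_lub (fun z => exists eps, 0 < eps < delta /\ z = Finite (f eps))).

Definition gfd_lower (kappa : R) (psi : vec) (q : R) : Rbar :=
  liminf0 (fun eps => ln (I_mu kappa psi q eps) / ((q - 1) * ln eps)).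
Definition gfd_upper (kappa : R) (psi : vec) (q : R) : Rbar :=
  limsup0 (fun eps => ln (I_mu kappa psi q eps) / ((q - 1) * ln eps)).

(* Write [b_k] for the weight [|| P_k psi ||^2] of the eigenvalue [lambda_(k+1) = -Lambda/(k+1)^2]
   and [m_k] for the [mu_psi]-mass of the [eps]-ball around it, so that
   [I(q, eps) = sum_k b_k m_k^(q-1)].  For [0 < q < 1] and [psi <> 0] two bounds hold at every
   scale: [I >= ||psi||^(2q)] since [m_k <= ||psi||^2], and, by Hoelder,
   [I <= ||psi||^(2q) N^(1-q)] whenever [sum_k b_k / m_k <= N].  As the eigenvalues accumulate at
   [0] with gaps of order [k^-3], the first [eps^(-1/3)] of them together with [Lambda eps^(-1/3)]
   intervals of length [eps] cover the spectrum, so [N] can be taken of order [eps^(-1/3)].  Hence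
   [ln I / ((q-1) ln eps)] eventually lies in [[-eta, 1/3 + eta]], for every [psi <> 0].

   The extreme values are attained along scales [eps -> 0] for generic [psi].  If the weights
   beyond some level [K] are tiny and [eps] is so small that [K] is negligible, [I] stays bounded
   and the ratio is close to [0]; truncations are dense.  If on the levels [K <= k < K'], with
   [K' ~ eps^(-1/3)] and [eps] below the gaps, all weights exceed [a], then [I >= (K' - K) a^q] and
   the ratio is close to [1/3]; adding a small flat spike to a truncation shows density.  Both
   conditions are strict inequalities on finitely many continuous functions of [psi], hence open,
   and the residual set is the intersection over all precisions. *)

From Stdlib Require Import Reals Lra Lia Psatz ZArith Classical_Prop.
From Coquelicot Require Import Coquelicot.
Open Scope R_scope.

Lemma exp_le_compat x y : x <= y -> exp x <= exp y.
Proof. intros [H|H]; [left; now apply exp_increasing|subst; apply Rle_refl]. Qed.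

Lemma neg_ln_pos x : 0 < x < 1 -> 0 < - ln x.
Proof. intros Hx; assert (ln x < ln 1) by (apply ln_increasing; lra); rewrite ln_1 in *; lra. Qed.

(* [ln] is [0] on nonpositive reals, hence the hypothesis [1 <= y]. *)
Lemma ln_le_of_ge1 x y : x <= y -> 1 <= y -> ln x <= ln y.
Proof.
  intros Hxy Hy; destruct (Rle_lt_dec x 0) as [Hx|Hx]; [|apply ln_le; lra].
  unfold ln at 1; destruct (Rlt_dec 0 x); [exfalso; lra|].
  rewrite <- ln_1; apply ln_le; lra.
Qed.

Lemma exp_convex a c t : 0 <= t <= 1 -> exp (t * a + (1 - t) * c) <= t * exp a + (1 - t) * exp c.
Proof.
  intros Ht; set (z := t * a + (1 - t) * c).
  assert (Htangent : forall x, exp z * (1 + (x - z)) <= exp x).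
  { intros x; replace (exp x) with (exp z * exp (x - z)) by (rewrite <- exp_plus; f_equal; ring).
    apply Rmult_le_compat_l; [left; apply exp_pos|apply exp_ineq1_le]. }
  pose proof (Rmult_le_compat_l t _ _ (proj1 Ht) (Htangent a)).
  pose proof (Rmult_le_compat_l (1 - t) _ _ ltac:(lra) (Htangent c)).
  assert (t * (exp z * (1 + (a - z))) + (1 - t) * (exp z * (1 + (c - z))) = exp z) by (unfold z; ring).
  lra.
Qed.

Lemma Rpower_young x y t : 0 < x -> 0 < y -> 0 <= t <= 1 ->
  Rpower x t * Rpower y (1 - t) <= t * x + (1 - t) * y.
Proof.
  intros Hx Hy Ht; unfold Rpower; rewrite <- exp_plus.
  replace (t * x + (1 - t) * y) with (t * exp (ln x) + (1 - t) * exp (ln y)) by (rewrite !exp_ln; auto).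
  now apply exp_convex.
Qed.

Lemma Rpower_mult_pred b q : 0 < b -> b * Rpower b (q - 1) = Rpower b q.
Proof. intros Hb; rewrite <- (Rpower_1 b) at 1 by auto; rewrite <- Rpower_plus; f_equal; ring. Qed.

Lemma Rpower_antitone_base x a b : x <= 0 -> 0 < a <= b -> Rpower b x <= Rpower a x.
Proof.
  intros Hx Hab; unfold Rpower; apply exp_le_compat.
  assert (ln a <= ln b) by (apply ln_le; lra); nra.
Qed.

Lemma Rpower_antitone_exp s p q : 0 < s <= 1 -> p <= q -> Rpower s q <= Rpower s p.
Proof.
  intros Hs Hpq; unfold Rpower; apply exp_le_compat.
  assert (ln s <= 0) by (rewrite <- ln_1; apply ln_le; lra); nra.
Qed.

Lemma Rpower_le_of_le_1 x s p q : 0 < x <= s -> s <= 1 -> 0 < p <= q -> Rpower x q <= Rpower s p.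
Proof.
  intros Hxs Hs Hpq; apply Rle_trans with (Rpower s q);
    [apply Rle_Rpower_l; lra|apply Rpower_antitone_exp; lra].
Qed.

Lemma Rpower_le_1_plus b q : 0 < b -> 0 <= q <= 1 -> Rpower b q <= 1 + b.
Proof.
  intros Hb Hq; destruct (Rle_dec b 1).
  - rewrite <- (Rpower_O b) by auto; pose proof (Rpower_antitone_exp b 0 q); lra.
  - rewrite <- (Rpower_1 b) at 2 by auto; pose proof (Rle_Rpower b q 1); lra.
Qed.

Lemma Rdiv_ge0 x y : 0 <= x -> 0 <= y -> 0 <= x / y.
Proof.
  intros Hx [Hy|<-]; [now apply Rdiv_le_0_compat|].
  unfold Rdiv; rewrite Rinv_0; lra.
Qed.

(* Also for [y = 0], where [x / 0 = 0]. *)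
Lemma Rdiv_le_1 x y : 0 <= x <= y -> x / y <= 1.
Proof.
  intros Hxy; destruct (Req_dec y 0) as [->|Hy]; [unfold Rdiv; rewrite Rinv_0; lra|].
  apply Rle_div_l; lra.
Qed.

Lemma sqrt_lt_of_lt_square x d : 0 <= x -> 0 < d -> x < d * d -> sqrt x < d.
Proof. intros Hx Hd H; rewrite <- (sqrt_square d) by lra; apply sqrt_lt_1; nra. Qed.

Lemma sqr_diff_le (x y d t : R) : 0 < t -> 0 <= x -> 0 <= y -> Rabs (y - x) <= d ->
  Rabs (y ^ 2 - x ^ 2) <= t * x ^ 2 + (1 + / t) * d ^ 2.
Proof.
  intros Ht Hx Hy Hd.
  assert (Hamgm : 2 * x * d <= t * x ^ 2 + / t * d ^ 2).
  { assert (E : t * x ^ 2 + / t * d ^ 2 - 2 * x * d = / t * (t * x - d) ^ 2) by (field; lra).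
    assert (0 <= / t * (t * x - d) ^ 2)
      by (apply Rmult_le_pos; [left; now apply Rinv_0_lt_compat|apply pow2_ge_0]).
    lra. }
  replace (y ^ 2 - x ^ 2) with ((y - x) * (y + x)) by ring.
  rewrite Rabs_mult, (Rabs_pos_eq (y + x)) by lra.
  pose proof (proj1 (Rabs_le_between' _ _ _) Hd).
  apply Rle_trans with (d * (d + 2 * x)); [apply Rmult_le_compat; auto using Rabs_pos; lra|nra].
Qed.

Lemma nat_floor_ex x : 0 <= x -> exists n : nat, INR n <= x < INR n + 1.
Proof.
  intros Hx; destruct (archimed x) as [Hup1 Hup2].
  assert (Hz : (0 <= up x - 1)%Z) by (assert (Hup : 0 < IZR (up x)) by lra; apply lt_IZR in Hup; lia).
  exists (Z.to_nat (up x - 1)); rewrite INR_IZR_INZ, Z2Nat.id, minus_IZR by auto; simpl; lra.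
Qed.

Lemma sum_n_le (a b : nat -> R) n : (forall k, a k <= b k) -> sum_n a n <= sum_n b n.
Proof. intros Hab; apply sum_n_m_le; auto. Qed.

Lemma sum_n_le_loc (a b : nat -> R) n : (forall k, (k <= n)%nat -> a k <= b k) -> sum_n a n <= sum_n b n.
Proof.
  induction n as [|n IH]; intros Hab; [rewrite !sum_O; auto|].
  rewrite !sum_Sn; apply Rplus_le_compat; auto.
Qed.

Lemma sum_n_Rplus (a b : nat -> R) n : sum_n (fun k => a k + b k) n = sum_n a n + sum_n b n.
Proof. exact (sum_n_plus a b n). Qed.

Lemma sum_n_Rmult_l (c : R) (a : nat -> R) n : sum_n (fun k => c * a k) n = c * sum_n a n.
Proof. exact (sum_n_mult_l c a n). Qed.

Lemma sum_n_Rmult_r (c : R) (a : nat -> R) n : sum_n (fun k => a k * c) n = sum_n a n * c.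
Proof. exact (sum_n_mult_r c a n). Qed.

Lemma sum_n_zero n : sum_n (fun _ => 0) n = 0.
Proof. rewrite sum_n_const; change (INR (S n) * 0 = 0); ring. Qed.

Lemma sum_n_first (f : nat -> R) n : (forall i, (0 < i)%nat -> f i = 0) -> sum_n f n = f 0%nat.
Proof.
  intros Hf; induction n as [|n IH]; [apply sum_O|].
  rewrite sum_Sn, IH, (Hf (S n)) by lia; change (f 0%nat + 0 = f 0%nat); ring.
Qed.

(* The cast fixes the return type of the [if] to [R], as in the sums it is compared with. *)
Lemma sum_n_indicator_lt_le (K : nat) (c : R) n : 0 <= c ->
  sum_n (fun k => (if Nat.ltb k K then c else 0) : R) n <= INR K * c.
Proof.
  intros Hc.
  enough (E : sum_n (fun k => (if Nat.ltb k K then c else 0) : R) n = INR (Nat.min (S n) K) * c).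
  { rewrite E; apply Rmult_le_compat_r; [exact Hc|apply le_INR; lia]. }
  induction n as [|n IH].
  - rewrite sum_O; destruct K; cbn; lra.
  - rewrite sum_Sn, IH; change (plus ?x ?y) with (x + y).
    destruct (Nat.ltb_spec (S n) K).
    + rewrite !Nat.min_l, (S_INR (S n)) by lia; lra.
    + rewrite !Nat.min_r by lia; lra.
Qed.

Lemma Series_single (k : nat) (c : R) : Series (fun j => (if Nat.eqb j k then c else 0) : R) = c.
Proof.
  apply is_series_unique.
  assert (H : is_lim_seq (sum_n (fun j => if Nat.eqb j k then c else 0)) c); [|exact H].
  apply (is_lim_seq_ext_loc (fun _ => c)); [|apply is_lim_seq_const].
  exists k; intros n Hn; induction n as [|n IH].
  - replace k with 0%nat by lia; now rewrite sum_O.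
  - rewrite sum_Sn; change (plus ?x ?y) with (x + y); cbv beta.
    destruct (Nat.eqb_spec (S n) k) as [<-|Hne].
    + rewrite (sum_n_ext_loc _ (fun _ => 0)), sum_n_const
        by (intros j Hj; destruct (Nat.eqb_spec j (S n)); [lia|reflexivity]).
      lra.
    + rewrite <- IH by lia; lra.
Qed.

Lemma ex_series_lincomb (b c : R) (x y : nat -> R) : ex_series x -> ex_series y ->
  ex_series (fun k => b * x k + c * y k).
Proof.
  intros Hx Hy; apply (ex_series_plus (fun k => b * x k));
    [apply (ex_series_scal_l b x)|apply (ex_series_scal_l c y)]; auto.
Qed.

Lemma Series_lincomb (b c : R) (x y : nat -> R) : ex_series x -> ex_series y ->
  Series (fun k => b * x k + c * y k) = b * Series x + c * Series y.
Proof.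
  intros Hx Hy; rewrite Series_plus, !Series_scal_l;
    [reflexivity|apply (ex_series_scal_l b x)|apply (ex_series_scal_l c y)]; auto.
Qed.

Lemma ex_series_le_nonneg (a b : nat -> R) : (forall k, 0 <= a k <= b k) -> ex_series b ->
  ex_series a /\ Series a <= Series b.
Proof.
  intros Hab Hb; split; [|now apply Series_le].
  apply (ex_series_le a b); auto; intros n; rewrite Rabs_pos_eq; apply Hab.
Qed.

Section NonnegSeries.

Variable a : nat -> R.
Hypothesis a_ge0 : forall k, 0 <= a k.

Lemma sum_n_ge0 n : 0 <= sum_n a n.
Proof.
  induction n; [rewrite sum_O; auto|].
  rewrite sum_Sn; change (plus ?x ?y) with (x + y); specialize (a_ge0 (S n)); lra.
Qed.

Lemma sum_n_le_S n : sum_n a n <= sum_n a (S n).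
Proof. rewrite sum_Sn; change (plus ?x ?y) with (x + y); specialize (a_ge0 (S n)); lra. Qed.

Lemma le_sum_n k n : (k <= n)%nat -> a k <= sum_n a n.
Proof.
  induction 1 as [|n _ IH]; [|eapply Rle_trans; [exact IH|apply sum_n_le_S]].
  destruct k; [rewrite sum_O; lra|].
  rewrite sum_Sn; change (plus ?x ?y) with (x + y); pose proof (sum_n_ge0 k); lra.
Qed.

Lemma sum_n_le_Series n : ex_series a -> sum_n a n <= Series a.
Proof.
  intros [l Hl]; rewrite (is_series_unique a l Hl).
  assert (H : Rbar_le (sum_n a n) l); [|exact H].
  apply (is_lim_seq_le_loc (fun _ => sum_n a n) (sum_n a)); [|apply is_lim_seq_const|exact Hl].
  exists n; intros m Hm; induction Hm; [lra|eapply Rle_trans; [eauto|apply sum_n_le_S]].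
Qed.

Lemma le_Series k : ex_series a -> a k <= Series a.
Proof. intros Ha; eapply Rle_trans; [apply (le_sum_n k k)|apply sum_n_le_Series]; auto. Qed.

Lemma ex_series_bounded M : (forall n, sum_n a n <= M) -> ex_series a /\ Series a <= M.
Proof.
  intros HM; destruct (ex_finite_lim_seq_incr (sum_n a) M sum_n_le_S HM) as [l Hl].
  split; [now exists l|]; rewrite (is_series_unique a l Hl).
  assert (H : Rbar_le l M); [|exact H].
  eapply is_lim_seq_le; [exact HM|exact Hl|apply is_lim_seq_const].
Qed.

(* Also for divergent series, whose [Series] is [real p_infty = 0]. *)
Lemma Series_ge0 : 0 <= Series a.
Proof.
  destruct (classic (ex_series a)) as [Ha|Ha].
  - eapply Rle_trans; [apply (a_ge0 0)|apply le_Series; auto].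
  - unfold Series; destruct (ex_lim_seq_incr (sum_n a) sum_n_le_S) as [l Hl].
    rewrite (is_lim_seq_unique _ _ Hl).
    destruct l as [l| |]; simpl; [exfalso; apply Ha; now exists l|lra|].
    exfalso; assert (H : Rbar_le (sum_n a 0) m_infty); [|exact H].
    apply (is_lim_seq_le_loc (fun _ => sum_n a 0) (sum_n a)); [|apply is_lim_seq_const|exact Hl].
    exists 0%nat; intros n _; induction n; [lra|eapply Rle_trans; [eauto|apply sum_n_le_S]].
Qed.

Lemma Series_shift_le K : ex_series a -> Series (fun k => a (K + k)%nat) <= Series a.
Proof.
  intros Ha; destruct K; [apply Rle_refl|].
  rewrite (Series_incr_n a (S K)) by (auto; lia); simpl pred.
  pose proof (sum_n_ge0 K) as H; rewrite sum_n_Reals in H; lra.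
Qed.

End NonnegSeries.

(** * Covering bound for [sum_k b_k / m_k] *)

Section Covering.

Variables (b m : nat -> R) (cell : nat -> nat -> bool) (K M : nat).
Hypotheses (b_ge0 : forall k, 0 <= b k) (b_summable : ex_series b) (b_le_m : forall k, b k <= m k).
Hypothesis cells_cover : forall k, (K <= k)%nat -> exists i, (i <= M)%nat /\ cell i k = true.
Hypothesis cell_mass_le : forall i k, cell i k = true -> Series (fun j => if cell i j then b j else 0) <= m k.

Let restr i j : R := if cell i j then b j else 0.
Let piece i k : R := restr i k / Series (restr i).

Let restr_bounds i j : 0 <= restr i j <= b j.
Proof. unfold restr; destruct cell; pose proof (b_ge0 j); lra. Qed.

Let ex_series_restr i : ex_series (restr i).
Proof. apply (ex_series_le_nonneg _ b); auto. Qed.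

Let piece_ge0 i k : 0 <= piece i k.
Proof. apply Rdiv_ge0; [apply restr_bounds|apply Series_ge0; apply restr_bounds]. Qed.

Let ratio_le_pieces k : b k / m k <= (if Nat.ltb k K then 1 else 0) + sum_n (fun i => piece i k) M.
Proof.
  pose proof (sum_n_ge0 (fun i => piece i k) (fun i => piece_ge0 i k) M).
  destruct (Nat.ltb_spec k K) as [HkK|HKk].
  - pose proof (Rdiv_le_1 (b k) (m k) (conj (b_ge0 k) (b_le_m k))); lra.
  - destruct (cells_cover k HKk) as [i [HiM Hi]].
    assert (Hrk : restr i k = b k) by (unfold restr; now rewrite Hi).
    assert (b k / m k <= piece i k).
    { unfold piece; rewrite Hrk.
      destruct (b_ge0 k) as [Hbk|Hbk]; [|rewrite <- Hbk; unfold Rdiv; rewrite !Rmult_0_l; lra].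
      assert (b k <= Series (restr i))
        by (rewrite <- Hrk; apply le_Series; [intros; apply restr_bounds|apply ex_series_restr]).
      apply Rmult_le_compat_l; [lra|apply Rinv_le_contravar; [lra|now apply cell_mass_le]]. }
    pose proof (le_sum_n (fun i => piece i k) (fun i => piece_ge0 i k) i M HiM); lra.
Qed.

Let sum_n_piece_le_1 i n : sum_n (piece i) n <= 1.
Proof.
  unfold piece, Rdiv; rewrite sum_n_Rmult_r.
  apply Rdiv_le_1; split; [apply sum_n_ge0; intros; apply restr_bounds|].
  apply sum_n_le_Series; [intros; apply restr_bounds|apply ex_series_restr].
Qed.

Lemma sum_n_ratio_le_cover n : sum_n (fun k => b k / m k) n <= INR K + INR M + 1.
Proof.
  eapply Rle_trans; [apply sum_n_le, ratio_le_pieces|].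
  assert (Hswitch : sum_n (fun k => sum_n (fun i => piece i k) M) n = sum_n (fun i => sum_n (piece i) n) M)
    by (symmetry; apply sum_n_switch).
  rewrite sum_n_Rplus, Hswitch.
  assert (Hcells : sum_n (fun i => sum_n (piece i) n) M <= sum_n (fun _ => 1) M)
    by (apply sum_n_le; intros i; apply sum_n_piece_le_1).
  rewrite sum_n_const, S_INR in Hcells.
  pose proof (sum_n_indicator_lt_le K 1 n ltac:(lra)); lra.
Qed.

End Covering.

Definition diffv (v w : vec) : vec := fun n l j => Cminus (v n l j) (w n l j).
Definition sqnorm (v : vec) : R := Series (block v).
Definition tail (v : vec) (K : nat) : R := Series (fun k => block v (K + k)).

Lemma distH_sqnorm v w : distH v w = sqrt (sqnorm (diffv v w)).
Proof. reflexivity. Qed.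

Lemma block_ge0 v k : 0 <= block v k.
Proof. apply sum_n_ge0; intros l; apply sum_n_ge0; intros j; apply pow2_ge_0. Qed.

Lemma block_ext (v w : vec) k : (forall l j, Cmod (v (S k) l j) = Cmod (w (S k) l j)) -> block v k = block w k.
Proof. intros H; apply sum_n_ext; intros l; apply sum_n_ext; intros j; now rewrite H. Qed.

Lemma block_zero (v : vec) k : (forall l j, v (S k) l j = 0%C) -> block v k = 0.
Proof.
  intros H; unfold block; transitivity (sum_n (fun _ => 0) k); [apply sum_n_ext; intros l|apply sum_n_zero].
  transitivity (sum_n (fun _ => 0) (2 * l)); [apply sum_n_ext; intros j|apply sum_n_zero].
  rewrite H, Cmod_0; simpl; lra.
Qed.

Lemma block_lincomb (x y z : vec) (a b c : R) k :
  (forall l j, a * Cmod (z (S k) l j) ^ 2 <= b * Cmod (x (S k) l j) ^ 2 + c * Cmod (y (S k) l j) ^ 2) ->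
  a * block z k <= b * block x k + c * block y k.
Proof.
  intros H; unfold block; rewrite <- !sum_n_Rmult_l, <- sum_n_Rplus.
  apply sum_n_le; intros l; rewrite <- !sum_n_Rmult_l, <- sum_n_Rplus.
  apply sum_n_le; intros j; apply H.
Qed.

Lemma Cmod_sqr_diff_le (v w : C) t : 0 < t ->
  Rabs (Cmod w ^ 2 - Cmod v ^ 2) <= t * Cmod v ^ 2 + (1 + / t) * Cmod (Cminus v w) ^ 2.
Proof.
  intros Ht; apply sqr_diff_le; auto using Cmod_ge_0.
  apply Rabs_le_between'; split.
  - replace v with (w + Cminus v w)%C at 1 by (unfold Cminus; ring).
    pose proof (Cmod_triangle w (Cminus v w)); lra.
  - replace w with (v + - Cminus v w)%C at 1 by (unfold Cminus; ring).
    pose proof (Cmod_triangle v (- Cminus v w)); rewrite Cmod_opp in *; lra.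
Qed.

Lemma Cmod_sqr_minus_le (v w : C) : Cmod (Cminus v w) ^ 2 <= 2 * Cmod v ^ 2 + 2 * Cmod w ^ 2.
Proof.
  pose proof (Cmod_triangle v (- w)) as Htri; rewrite Cmod_opp in Htri; fold (Cminus v w) in Htri.
  pose proof (Cmod_ge_0 w); pose proof (Cmod_ge_0 (Cminus v w)).
  apply Rle_trans with ((Cmod v + Cmod w) ^ 2); [apply pow_incr; lra|].
  pose proof (pow2_ge_0 (Cmod v - Cmod w)); nra.
Qed.

Lemma block_diffv_le v w k : block (diffv v w) k <= 2 * block v k + 2 * block w k.
Proof.
  rewrite <- (Rmult_1_l (block _ k)); apply block_lincomb; intros l j; unfold diffv.
  rewrite Rmult_1_l; apply Cmod_sqr_minus_le.
Qed.

Lemma ex_series_block_diffv v w : inH v -> inH w -> ex_series (block (diffv v w)).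
Proof.
  intros [_ Hv] [_ Hw].
  apply (ex_series_le_nonneg _ (fun k => 2 * block v k + 2 * block w k)); [|apply ex_series_lincomb; auto].
  intros k; split; [apply block_ge0|apply block_diffv_le].
Qed.

Lemma sqnorm_ge0 v : 0 <= sqnorm v.
Proof. apply Series_ge0, block_ge0. Qed.

Lemma tail_ge0 v K : 0 <= tail v K.
Proof. apply Series_ge0; intros; apply block_ge0. Qed.

Lemma ex_series_tail v K : inH v -> ex_series (fun k => block v (K + k)).
Proof. intros [_ Hv]; now apply ex_series_incr_n. Qed.

Lemma block_le_sqnorm v k : inH v -> block v k <= sqnorm v.
Proof. intros [_ Hv]; apply le_Series; auto using block_ge0. Qed.

Lemma tail_le_sqnorm v K : inH v -> tail v K <= sqnorm v.
Proof. intros [_ Hv]; apply Series_shift_le; auto using block_ge0. Qed.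

Lemma tail_S v K : inH v -> tail v K = block v K + tail v (S K).
Proof.
  intros Hv; unfold tail; rewrite Series_incr_1 by now apply ex_series_tail.
  rewrite Nat.add_0_r; f_equal; apply Series_ext; intros k; f_equal; lia.
Qed.

Lemma tail_indicator v K : Series (fun j => if Nat.leb K j then block v j else 0) = tail v K.
Proof.
  rewrite (Series_incr_n_aux _ K) by (intros j Hj; destruct (Nat.leb_spec K j); auto; lia).
  apply Series_ext; intros j; destruct (Nat.leb_spec K (K + j)); auto; lia.
Qed.

Lemma ex_series_tail_indicator v K : inH v -> ex_series (fun j => if Nat.leb K j then block v j else 0).
Proof.
  intros [_ Hv]; apply (ex_series_le_nonneg _ (block v)); auto.
  intros j; destruct Nat.leb; pose proof (block_ge0 v j); lra.
Qed.

Lemma block_le_tail v K k : inH v -> (K <= k)%nat -> block v k <= tail v K.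
Proof.
  intros Hv Hk; rewrite <- tail_indicator.
  replace (block v k) with (if Nat.leb K k then block v k else 0) by (destruct (Nat.leb_spec K k); auto; lia).
  apply (le_Series (fun j => if Nat.leb K j then block v j else 0));
    [intros j; destruct Nat.leb; auto using block_ge0; lra|now apply ex_series_tail_indicator].
Qed.

Lemma tail_antitone v K K' : inH v -> (K <= K')%nat -> tail v K' <= tail v K.
Proof.
  intros Hv HK; rewrite <- !tail_indicator; apply Series_le; [|now apply ex_series_tail_indicator].
  intros j; pose proof (block_ge0 v j).
  destruct (Nat.leb_spec K' j), (Nat.leb_spec K j); lia || lra.
Qed.

Lemma tail_vanishes v sig : inH v -> 0 < sig -> exists K, tail v K < sig.
Proof.
  intros Hv Hsig; pose proof Hv as [_ Hex].
  assert (Hlim : is_lim_seq (sum_n (block v)) (Series (block v))) by exact (Series_correct _ Hex).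
  destruct (proj2 (is_lim_seq_spec _ _) Hlim (mkposreal sig Hsig)) as [n Hn].
  specialize (Hn n (Nat.le_refl n)); simpl in Hn.
  exists (S n); unfold tail.
  rewrite (Series_incr_n (block v) (S n)), <- sum_n_Reals in Hn by (auto; lia); simpl pred in Hn.
  replace (sum_n (block v) n - _) with (- Series (fun k => block v (S n + k))) in Hn by ring.
  rewrite Rabs_Ropp in Hn; pose proof (Rle_abs (Series (fun k => block v (S n + k)))); lra.
Qed.

Section Perturbation.

Variables (v w : vec) (t : R).
Hypotheses (v_inH : inH v) (w_inH : inH w) (t_gt0 : 0 < t).

Lemma block_perturb_le k : block w k <= (1 + t) * block v k + (1 + / t) * block (diffv v w) k.
Proof.
  rewrite <- (Rmult_1_l (block w k)); apply block_lincomb; intros l j; unfold diffv.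
  pose proof (Cmod_sqr_diff_le (v (S k) l j) (w (S k) l j) t t_gt0) as H.
  apply Rabs_le_between in H; lra.
Qed.

Lemma block_perturb_ge k : block v k <= block w k + t * block v k + (1 + / t) * block (diffv v w) k.
Proof.
  enough ((1 - t) * block v k <= 1 * block w k + (1 + / t) * block (diffv v w) k) by lra.
  apply block_lincomb; intros l j; unfold diffv.
  pose proof (Cmod_sqr_diff_le (v (S k) l j) (w (S k) l j) t t_gt0) as H.
  apply Rabs_le_between in H; lra.
Qed.

Lemma tail_perturb K : Rabs (tail w K - tail v K) <= t * tail v K + (1 + / t) * sqnorm (diffv v w).
Proof.
  set (c := 1 + / t); set (D := Series (fun k => block (diffv v w) (K + k))).
  assert (HD : ex_series (fun k => block (diffv v w) (K + k)))
    by (apply ex_series_incr_n, ex_series_block_diffv; auto).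
  assert (HvK := ex_series_tail v K v_inH); assert (HwK := ex_series_tail w K w_inH).
  assert (HDle : D <= sqnorm (diffv v w)) by (apply Series_shift_le; auto using block_ge0, ex_series_block_diffv).
  assert (Hup : tail w K <= (1 + t) * tail v K + c * D).
  { unfold tail, D; rewrite <- Series_lincomb by auto.
    apply Series_le; [|now apply ex_series_lincomb].
    intros k; split; [apply block_ge0|apply block_perturb_le]. }
  assert (Hlow : tail v K <= tail w K + (t * tail v K + c * D)).
  { unfold tail, D; rewrite <- Series_lincomb, <- Series_plus by (auto using ex_series_lincomb).
    apply Series_le; [|apply (ex_series_plus (fun k => block w (K + k))); auto using ex_series_lincomb].
    intros k; split; [apply block_ge0|]; pose proof (block_perturb_ge (K + k)) as Hk; fold c in Hk; lra. }
  assert (c * D <= c * sqnorm (diffv v w))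
    by (apply Rmult_le_compat_l; auto; unfold c; pose proof (Rinv_0_lt_compat t t_gt0); lra).
  apply Rabs_le_between'; lra.
Qed.

End Perturbation.

Lemma tail_continuous v sig : inH v -> 0 < sig -> exists eta, 0 < eta /\
  forall w, inH w -> distH v w < eta -> forall K, Rabs (tail w K - tail v K) < sig.
Proof.
  intros Hv Hsig.
  set (T := sqnorm v); assert (HT : 0 <= T) by apply sqnorm_ge0.
  set (t := sig / (2 * (T + 1))); assert (Ht : 0 < t) by (unfold t; apply Rdiv_lt_0_compat; lra).
  set (c := 1 + / t); assert (Hc : 1 < c) by (unfold c; pose proof (Rinv_0_lt_compat t Ht); lra).
  exists (sqrt (sig / (2 * c))); split; [apply sqrt_lt_R0, Rdiv_lt_0_compat; lra|].
  intros w Hw Hd K; rewrite distH_sqnorm in Hd; apply sqrt_lt_0_alt in Hd.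
  assert (t * tail v K <= t * T) by (apply Rmult_le_compat_l; [lra|now apply tail_le_sqnorm]).
  assert (t * T < sig / 2) by (unfold t; apply Rmult_lt_reg_r with (2 * (T + 1)); [lra|field_simplify; lra]).
  assert (c * sqnorm (diffv v w) < sig / 2).
  { apply Rmult_lt_reg_r with (/ c); [apply Rinv_0_lt_compat; lra|].
    replace (sig / 2 * / c) with (sig / (2 * c)) by (field; lra).
    replace (c * sqnorm (diffv v w) * / c) with (sqnorm (diffv v w)) by (field; lra); lra. }
  pose proof (tail_perturb v w t Hv Hw Ht K) as HP; fold c in HP; lra.
Qed.

Lemma block_continuous v sig : inH v -> 0 < sig -> exists eta, 0 < eta /\
  forall w, inH w -> distH v w < eta -> forall k, Rabs (block w k - block v k) < sig.
Proof.
  intros Hv Hsig; destruct (tail_continuous v (sig / 2) Hv) as [eta [Heta Hcont]]; [lra|].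
  exists eta; split; auto; intros w Hw Hd k.
  pose proof (Hcont w Hw Hd k) as Htail_k; pose proof (Hcont w Hw Hd (S k)) as Htail_Sk.
  rewrite (tail_S v), (tail_S w) in Htail_k by auto.
  apply Rabs_lt_between' in Htail_k, Htail_Sk; apply Rabs_lt_between'; lra.
Qed.

Definition stable_near (v : vec) (P : vec -> Prop) : Prop :=
  exists eta, 0 < eta /\ forall w, inH w -> distH v w < eta -> P w.

Lemma stable_near_and v (P Q : vec -> Prop) :
  stable_near v P -> stable_near v Q -> stable_near v (fun w => P w /\ Q w).
Proof.
  intros [e1 [He1 H1]] [e2 [He2 H2]]; exists (Rmin e1 e2); split; [now apply Rmin_pos|].
  intros w Hw Hd; pose proof (Rmin_l e1 e2); pose proof (Rmin_r e1 e2); split; [apply H1|apply H2]; auto; lra.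
Qed.

Lemma stable_near_forall_lt v (P : nat -> vec -> Prop) K :
  (forall k, (k < K)%nat -> stable_near v (P k)) -> stable_near v (fun w => forall k, (k < K)%nat -> P k w).
Proof.
  induction K as [|K IH]; intros HP; [exists 1; split; [lra|]; intros; lia|].
  destruct (stable_near_and v _ _ (IH (fun k Hk => HP k ltac:(lia))) (HP K ltac:(lia))) as [e [He H]].
  exists e; split; auto; intros w Hw Hd k Hk.
  destruct (H w Hw Hd) as [Hbelow HK]; destruct (Nat.eq_dec k K) as [->|]; auto.
  apply Hbelow; lia.
Qed.

Lemma stable_near_tail_lt v K s : inH v -> tail v K < s -> stable_near v (fun w => tail w K < s).
Proof.
  intros Hv Hs; destruct (tail_continuous v (s - tail v K) Hv) as [eta [Heta H]]; [lra|].
  exists eta; split; auto; intros w Hw Hd; specialize (H w Hw Hd K).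
  apply Rabs_lt_between' in H; lra.
Qed.

Lemma stable_near_block_gt v k a : inH v -> a < block v k -> stable_near v (fun w => a < block w k).
Proof.
  intros Hv Ha; destruct (block_continuous v (block v k - a) Hv) as [eta [Heta H]]; [lra|].
  exists eta; split; auto; intros w Hw Hd; specialize (H w Hw Hd k).
  apply Rabs_lt_between' in H; lra.
Qed.

(** * The Hydrogen eigenvalues *)

Lemma lambda_S kappa k : lambda kappa (S k) = - (kappa ^ 2 / 4) / (INR k + 1) ^ 2.
Proof. unfold lambda; rewrite S_INR; reflexivity. Qed.

Lemma lambda_S_bounds kappa K k : (K <= k)%nat ->
  - (kappa ^ 2 / 4) / (INR K + 1) ^ 2 <= lambda kappa (S k) <= 0.
Proof.
  intros Hk; rewrite lambda_S; pose proof (pos_INR K).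
  assert (HLam : 0 <= kappa ^ 2 / 4) by nra.
  assert (Hinv : / (INR k + 1) ^ 2 <= / (INR K + 1) ^ 2).
  { apply Rinv_le_contravar; [apply pow_lt; lra|apply pow_incr].
    split; [lra|apply Rplus_le_compat_r, le_INR; auto]. }
  assert (Hinv0 : 0 <= / (INR k + 1) ^ 2) by (left; apply Rinv_0_lt_compat, pow_lt; pose proof (pos_INR k); lra).
  pose proof (Rmult_le_compat_l _ _ _ HLam Hinv); pose proof (Rmult_le_pos _ _ HLam Hinv0).
  unfold Rdiv in *; split; lra.
Qed.

Lemma lambda_close kappa K j k : (K <= j)%nat -> (K <= k)%nat ->
  Rabs (lambda kappa (S j) - lambda kappa (S k)) <= kappa ^ 2 / 4 / (INR K + 1) ^ 2.
Proof.
  intros Hj Hk; pose proof (lambda_S_bounds kappa K j Hj); pose proof (lambda_S_bounds kappa K k Hk).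
  unfold Rdiv in *; apply Rabs_le; lra.
Qed.

Lemma inv_sqr_gap x y K : 1 <= x -> x + 1 <= y -> x <= K -> / (K + 1) ^ 3 <= / x ^ 2 - / y ^ 2.
Proof.
  intros Hx Hy HK.
  assert (/ y ^ 2 <= / (x + 1) ^ 2) by (apply Rinv_le_contravar; [nra|apply pow_incr; lra]).
  assert (/ (K + 1) ^ 3 <= / (x + 1) ^ 3) by (apply Rinv_le_contravar; [nra|apply pow_incr; lra]).
  assert (/ x ^ 2 - / (x + 1) ^ 2 - / (x + 1) ^ 3 = ((2 * x + 1) * (x + 1) - x ^ 2) / (x ^ 2 * (x + 1) ^ 3))
    by (field; lra).
  assert (0 <= ((2 * x + 1) * (x + 1) - x ^ 2) / (x ^ 2 * (x + 1) ^ 3)) by (apply Rdiv_le_0_compat; nra).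
  lra.
Qed.

Lemma lambda_gap_lt kappa K i j : (i < j)%nat -> (i < K)%nat ->
  kappa ^ 2 / 4 / (INR K + 1) ^ 3 <= lambda kappa (S j) - lambda kappa (S i).
Proof.
  intros Hij HiK; rewrite !lambda_S; pose proof (pos_INR i).
  assert (INR i + 1 + 1 <= INR j + 1) by (rewrite <- !S_INR; apply le_INR; lia).
  assert (INR i + 1 <= INR K) by (rewrite <- S_INR; apply le_INR; lia).
  pose proof (inv_sqr_gap (INR i + 1) (INR j + 1) (INR K) ltac:(lra) ltac:(lra) ltac:(lra)) as Hgap.
  assert (HLam : 0 <= kappa ^ 2 / 4) by nra.
  pose proof (Rmult_le_compat_l _ _ _ HLam Hgap); unfold Rdiv in *; lra.
Qed.

Lemma lambda_gap kappa K j k : (k < K)%nat -> j <> k ->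
  kappa ^ 2 / 4 / (INR K + 1) ^ 3 <= Rabs (lambda kappa (S j) - lambda kappa (S k)).
Proof.
  intros HkK Hjk.
  assert (0 <= kappa ^ 2 / 4 / (INR K + 1) ^ 3)
    by (apply Rdiv_le_0_compat; [nra|apply pow_lt; pose proof (pos_INR K); lra]).
  destruct (Nat.lt_total j k) as [Hlt|[Heq|Hgt]]; [|lia|].
  - pose proof (lambda_gap_lt kappa K j k Hlt ltac:(lia)); rewrite Rabs_minus_sym, Rabs_pos_eq; lra.
  - pose proof (lambda_gap_lt kappa K k j Hgt HkK); rewrite Rabs_pos_eq; lra.
Qed.

Definition in_cell (eps : R) (i : nat) (x : R) : bool :=
  if Rle_dec (INR i * eps) x then if Rlt_dec x ((INR i + 1) * eps) then true else false else false.

Lemma in_cell_close eps i x y : in_cell eps i x = true -> in_cell eps i y = true -> Rabs (x - y) < eps.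
Proof.
  unfold in_cell; intros Hx Hy.
  destruct (Rle_dec (INR i * eps) x), (Rlt_dec x ((INR i + 1) * eps)); try discriminate.
  destruct (Rle_dec (INR i * eps) y), (Rlt_dec y ((INR i + 1) * eps)); try discriminate.
  apply Rabs_def1; lra.
Qed.

Lemma in_cell_exists eps M x : 0 <= x < (INR M + 1) * eps -> exists i, (i <= M)%nat /\ in_cell eps i x = true.
Proof.
  induction M as [|M IH]; intros Hx.
  - exists 0%nat; split; auto; unfold in_cell; simpl in *.
    destruct Rle_dec; [destruct Rlt_dec; auto|]; lra.
  - destruct (Rlt_dec x ((INR M + 1) * eps)) as [Hlt|Hge].
    + destruct (IH (conj (proj1 Hx) Hlt)) as [i [HiM Hi]]; exists i; split; auto.
    + exists (S M); split; auto; unfold in_cell; rewrite S_INR in *.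
      destruct Rle_dec; [destruct Rlt_dec; auto|]; lra.
Qed.

(* With [r = eps^(-1/3)]: [r] eigenvalues and [Lam r] intervals of length [eps] cover the rest. *)
Lemma cover_count_bound Lam eps : 0 < Lam -> 0 < eps < 1 -> exists K M : nat,
  Lam / (INR K + 1) ^ 2 < (INR M + 1) * eps /\ INR K + INR M + 1 <= (2 + Lam) * Rpower eps (- / 3).
Proof.
  intros HLam Heps; set (r := Rpower eps (- / 3)).
  assert (Hr1 : 1 <= r).
  { unfold r, Rpower; rewrite <- exp_0; apply exp_le_compat; pose proof (neg_ln_pos eps Heps); lra. }
  assert (Hr3 : r * r * r * eps = 1).
  { transitivity (exp (- / 3 * ln eps + - / 3 * ln eps + - / 3 * ln eps + ln eps)).
    - rewrite !exp_plus, exp_ln by lra; reflexivity.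
    - rewrite <- exp_0; f_equal; field. }
  destruct (nat_floor_ex r) as [K [HK1 HK2]]; [lra|].
  destruct (nat_floor_ex (Lam * r)) as [M [HM1 HM2]]; [nra|].
  exists K, M; split; [|nra].
  apply Rlt_le_trans with (Lam * r * eps); [|apply Rmult_le_compat_r; lra].
  replace (Lam * r * eps) with (Lam / (r * r)) by (field_simplify_eq; nra).
  apply Rmult_lt_compat_l; auto; apply Rinv_lt_contravar; nra.
Qed.

(** * Ball masses and moments of the spectral measure *)

Section BallMass.

Variables (kappa : R) (psi : vec) (eps : R).
Hypotheses (psi_inH : inH psi) (eps_gt0 : 0 < eps).

Definition ball_mass (k : nat) : R := mu_ball kappa psi (lambda kappa (S k)) eps.

Let ball_term k j : R :=
  if Rlt_dec (Rabs (lambda kappa (S j) - lambda kappa (S k))) eps then block psi j else 0.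

Let ball_term_bounds k j : 0 <= ball_term k j <= block psi j.
Proof. unfold ball_term; destruct Rlt_dec; pose proof (block_ge0 psi j); lra. Qed.

Let ex_series_ball_term k : ex_series (ball_term k).
Proof. apply (ex_series_le_nonneg _ (block psi)); [apply ball_term_bounds|apply psi_inH]. Qed.

Lemma ball_mass_le_sqnorm k : ball_mass k <= sqnorm psi.
Proof. apply Series_le; [apply ball_term_bounds|apply psi_inH]. Qed.

Lemma ball_mass_ge_restr (P : nat -> bool) k :
  (forall j, P j = true -> Rabs (lambda kappa (S j) - lambda kappa (S k)) < eps) ->
  Series (fun j => if P j then block psi j else 0) <= ball_mass k.
Proof.
  intros HP; apply Series_le; [|apply ex_series_ball_term].
  intros j; pose proof (block_ge0 psi j); destruct (P j) eqn:Hj; destruct Rlt_dec as [Hnear|Hfar]; try lra.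
  exfalso; apply Hfar, HP, Hj.
Qed.

Lemma block_le_ball_mass k : block psi k <= ball_mass k.
Proof.
  replace (block psi k) with (Series (fun j => if Nat.eqb j k then block psi j else 0)) at 1.
  - apply ball_mass_ge_restr; intros j Hj; apply Nat.eqb_eq in Hj; subst.
    unfold Rminus; rewrite Rplus_opp_r, Rabs_R0; exact eps_gt0.
  - rewrite <- (Series_single k (block psi k)).
    apply Series_ext; intros j; destruct (Nat.eqb_spec j k); subst; reflexivity.
Qed.

Lemma ball_mass_isolated k :
  (forall j, j <> k -> eps <= Rabs (lambda kappa (S j) - lambda kappa (S k))) ->
  ball_mass k = block psi k.
Proof.
  intros Hgap; unfold ball_mass, mu_ball; rewrite <- (Series_single k (block psi k)).
  apply Series_ext; intros j; destruct (Nat.eqb_spec j k) as [->|Hjk].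
  - unfold Rminus; rewrite Rplus_opp_r, Rabs_R0; destruct Rlt_dec; [reflexivity|lra].
  - destruct Rlt_dec as [Hnear|]; [specialize (Hgap j Hjk); lra|reflexivity].
Qed.

Lemma tail_le_ball_mass K k : kappa ^ 2 / 4 / (INR K + 1) ^ 2 < eps -> (K <= k)%nat ->
  tail psi K <= ball_mass k.
Proof.
  intros HK Hk; rewrite <- tail_indicator; apply ball_mass_ge_restr; intros j Hj.
  apply Nat.leb_le in Hj; pose proof (lambda_close kappa K j k Hj Hk); lra.
Qed.

(* Cover the eigenvalues beyond the [K]-th by [M + 1] intervals of length [eps]. *)
Lemma sum_n_ratio_le K M n : kappa ^ 2 / 4 / (INR K + 1) ^ 2 < (INR M + 1) * eps ->
  sum_n (fun k => block psi k / ball_mass k) n <= INR K + INR M + 1.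
Proof.
  intros HKM.
  apply (sum_n_ratio_le_cover _ _ (fun i k => in_cell eps i (- lambda kappa (S k))));
    [apply block_ge0|apply psi_inH|apply block_le_ball_mass| |].
  - intros k Hk; apply in_cell_exists; pose proof (lambda_S_bounds kappa K k Hk); lra.
  - intros i k Hk; apply ball_mass_ge_restr; intros j Hj.
    pose proof (in_cell_close eps i _ _ Hj Hk) as Hclose.
    rewrite Rabs_minus_sym; replace (lambda kappa (S k) - lambda kappa (S j))
      with (- lambda kappa (S j) - - lambda kappa (S k)) by ring; exact Hclose.
Qed.

Section Moments.

Variable q : R.
Hypothesis q_lt1 : q < 1.

Definition I_term (k : nat) : R :=
  block psi k * (if Rlt_dec 0 (ball_mass k) then Rpower (ball_mass k) (q - 1) else 0).

Lemma I_mu_Series : I_mu kappa psi q eps = Series I_term.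
Proof. reflexivity. Qed.

Lemma I_term_ge0 k : 0 <= I_term k.
Proof.
  apply Rmult_le_pos; [apply block_ge0|]; destruct Rlt_dec; [|lra].
  left; apply exp_pos.
Qed.

Lemma I_term_pos k : 0 < block psi k -> I_term k = block psi k * Rpower (ball_mass k) (q - 1).
Proof.
  intros Hb; pose proof (block_le_ball_mass k); unfold I_term.
  destruct Rlt_dec; [reflexivity|lra].
Qed.

Lemma I_term_le c k : 0 < c -> (0 < block psi k -> c <= ball_mass k) ->
  I_term k <= block psi k * Rpower c (q - 1).
Proof.
  intros Hc Hcm; destruct (block_ge0 psi k) as [Hb|Hb].
  - rewrite I_term_pos by auto; apply Rmult_le_compat_l; [lra|].
    apply Rpower_antitone_base; [lra|split; auto].
  - unfold I_term; rewrite <- Hb, !Rmult_0_l; lra.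
Qed.

Lemma I_term_ge c k : ball_mass k <= c -> block psi k * Rpower c (q - 1) <= I_term k.
Proof.
  intros Hmc; destruct (block_ge0 psi k) as [Hb|Hb].
  - pose proof (block_le_ball_mass k).
    rewrite I_term_pos by auto; apply Rmult_le_compat_l; [lra|].
    apply Rpower_antitone_base; [lra|split; lra].
  - rewrite <- Hb, Rmult_0_l; apply I_term_ge0.
Qed.

Lemma I_term_le_Rpower k : 0 < block psi k -> I_term k <= Rpower (block psi k) q.
Proof.
  intros Hb; rewrite <- Rpower_mult_pred by auto.
  apply I_term_le; auto; intros; apply block_le_ball_mass.
Qed.

Lemma I_term_isolated k :
  (forall j, j <> k -> eps <= Rabs (lambda kappa (S j) - lambda kappa (S k))) ->
  0 < block psi k -> I_term k = Rpower (block psi k) q.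
Proof.
  intros Hgap Hb; rewrite I_term_pos, ball_mass_isolated by auto; now apply Rpower_mult_pred.
Qed.

Lemma I_term_le_young T N k : 0 < q -> 0 < T -> 0 < N ->
  I_term k <= Rpower T q * Rpower N (1 - q) *
              (q * (block psi k / T) + (1 - q) * (block psi k / ball_mass k / N)).
Proof.
  intros Hq HT HN.
  assert (HP : 0 < Rpower T q * Rpower N (1 - q)) by (apply Rmult_lt_0_compat; apply exp_pos).
  set (b := block psi k); set (m := ball_mass k).
  destruct (block_ge0 psi k) as [Hb|Hb]; fold b in Hb.
  2: { unfold I_term; fold b m; rewrite <- Hb; unfold Rdiv; rewrite !Rmult_0_l, Rmult_0_r, Rplus_0_l, Rmult_0_r.
       lra. }
  assert (Hm : 0 < m) by (pose proof (block_le_ball_mass k); unfold m, b in *; lra).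
  assert (Lx : ln (b / T) = ln b - ln T)
    by (unfold Rdiv; rewrite ln_mult, ln_Rinv; auto using Rinv_0_lt_compat).
  assert (Ly : ln (b / m / N) = ln b - ln m - ln N)
    by (unfold Rdiv; rewrite !ln_mult, !ln_Rinv; auto using Rinv_0_lt_compat, Rmult_lt_0_compat).
  assert (E : I_term k = Rpower T q * Rpower N (1 - q) * (Rpower (b / T) q * Rpower (b / m / N) (1 - q))).
  { rewrite I_term_pos by auto; fold b m.
    transitivity (exp (ln b + (q - 1) * ln m)); [unfold Rpower; rewrite exp_plus, exp_ln; auto|].
    unfold Rpower; rewrite Lx, Ly, <- !exp_plus; f_equal; ring. }
  rewrite E; apply Rmult_le_compat_l; [lra|].
  apply Rpower_young; [apply Rdiv_lt_0_compat|apply Rdiv_lt_0_compat; [apply Rdiv_lt_0_compat|]|]; auto; lra.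
Qed.

Lemma I_term_holder N : 0 < q -> 0 < sqnorm psi -> 0 < N ->
  (forall n, sum_n (fun k => block psi k / ball_mass k) n <= N) ->
  ex_series I_term /\ Series I_term <= Rpower (sqnorm psi) q * Rpower N (1 - q).
Proof.
  intros Hq HT HN Hratio; apply ex_series_bounded; [apply I_term_ge0|intros n].
  set (P := Rpower (sqnorm psi) q * Rpower N (1 - q)).
  assert (HP : 0 < P) by (apply Rmult_lt_0_compat; apply exp_pos).
  eapply Rle_trans; [apply sum_n_le; intros k; apply (I_term_le_young (sqnorm psi) N k); auto|].
  fold P; rewrite sum_n_Rmult_l, sum_n_Rplus, !sum_n_Rmult_l.
  rewrite (sum_n_Rmult_r (/ sqnorm psi) (block psi)), (sum_n_Rmult_r (/ N) (fun k => block psi k / ball_mass k)).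
  assert (Hb : sum_n (block psi) n / sqnorm psi <= 1)
    by (apply Rle_div_l; [|rewrite Rmult_1_l; apply sum_n_le_Series]; auto using block_ge0; apply psi_inH).
  assert (Hr : sum_n (fun k => block psi k / ball_mass k) n / N <= 1)
    by (apply Rle_div_l; [|rewrite Rmult_1_l]; auto).
  unfold Rdiv in Hb, Hr.
  assert (q * (sum_n (block psi) n * / sqnorm psi) + (1 - q) * (sum_n (fun k => block psi k / ball_mass k) n * / N) <= 1).
  { pose proof (Rmult_le_compat_l q _ _ ltac:(lra) Hb).
    pose proof (Rmult_le_compat_l (1 - q) _ _ ltac:(lra) Hr); lra. }
  apply Rle_trans with (P * 1); [apply Rmult_le_compat_l|]; lra.
Qed.

Lemma ex_series_I_term : 0 < q -> ex_series I_term.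
Proof.
  intros Hq; destruct (sqnorm_ge0 psi) as [HT|HT].
  - destruct (INR_archimed eps (kappa ^ 2 / 4) eps_gt0) as [M HM].
    apply (I_term_holder (INR 0 + INR M + 1)); auto; [simpl; pose proof (pos_INR M); lra|].
    intros n; apply sum_n_ratio_le; simpl; lra.
  - apply (ex_series_le_nonneg _ (block psi)); [|apply psi_inH]; intros k; split; [apply I_term_ge0|].
    assert (Hb : block psi k = 0) by (pose proof (block_le_sqnorm psi k psi_inH); pose proof (block_ge0 psi k); lra).
    unfold I_term; rewrite Hb; lra.
Qed.

Lemma Rpower_sqnorm_le_I : 0 < q -> 0 < sqnorm psi -> Rpower (sqnorm psi) q <= Series I_term.
Proof.
  intros Hq HT; rewrite <- Rpower_mult_pred by auto; unfold sqnorm at 1; rewrite <- Series_scal_r.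
  apply Series_le; [|now apply ex_series_I_term].
  intros k; split; [apply Rmult_le_pos; [apply block_ge0|left; apply exp_pos]|].
  apply I_term_ge, ball_mass_le_sqnorm.
Qed.

Lemma ln_I_le : 0 < kappa -> 0 < q -> 0 < sqnorm psi -> eps < 1 ->
  ln (Series I_term) <= q * ln (sqnorm psi) + (1 - q) * (ln (2 + kappa ^ 2 / 4) - ln eps / 3).
Proof.
  intros Hk Hq HT He1.
  destruct (cover_count_bound (kappa ^ 2 / 4) eps) as [K [M [HKM HN]]]; [nra|lra|].
  set (N := INR K + INR M + 1) in HN.
  assert (HN0 : 0 < N) by (unfold N; pose proof (pos_INR K); pose proof (pos_INR M); lra).
  destruct (I_term_holder N) as [_ Hup]; auto; [intros n; now apply sum_n_ratio_le|].
  assert (HI : 0 < Series I_term) by (eapply Rlt_le_trans; [apply exp_pos|now apply Rpower_sqnorm_le_I]).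
  apply ln_le in Hup; auto; rewrite ln_mult, !ln_Rpower in Hup by apply exp_pos.
  apply ln_le in HN; auto; rewrite ln_mult, ln_Rpower in HN by (try apply exp_pos; nra).
  assert ((1 - q) * ln N <= (1 - q) * (ln (2 + kappa ^ 2 / 4) - ln eps / 3))
    by (apply Rmult_le_compat_l; lra).
  lra.
Qed.

Lemma I_term_le_pieces K K' s p k : 0 < p <= q -> (K <= K')%nat ->
  kappa ^ 2 / 4 / (INR K' + 1) ^ 2 < eps -> s <= 1 -> tail psi K < s ->
  I_term k <= (if Nat.ltb k K then 1 else 0) + block psi k + (if Nat.ltb k K' then Rpower s p else 0) +
              (if Nat.leb K' k then block psi k * Rpower (tail psi K') (q - 1) else 0).
Proof.
  intros Hp HKK' HK' Hs HtailK.
  pose proof (exp_pos (p * ln s)); pose proof (exp_pos ((q - 1) * ln (tail psi K'))).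
  destruct (block_ge0 psi k) as [Hb|Hb].
  2: { assert (I_term k = 0) by (unfold I_term; rewrite <- Hb; ring).
       rewrite <- Hb; unfold Rpower; destruct Nat.ltb, Nat.ltb, Nat.leb; lra. }
  pose proof (I_term_le_Rpower k Hb).
  destruct (Nat.ltb_spec k K).
  - pose proof (Rpower_le_1_plus (block psi k) q Hb ltac:(lra)).
    unfold Rpower in *; destruct Nat.ltb, Nat.leb; nra.
  - destruct (Nat.ltb_spec k K'), (Nat.leb_spec K' k); try lia.
    + pose proof (block_le_tail psi K k psi_inH ltac:(lia)).
      pose proof (Rpower_le_of_le_1 (block psi k) s p q ltac:(lra) Hs Hp); lra.
    + enough (I_term k <= block psi k * Rpower (tail psi K') (q - 1)) by lra.
      apply I_term_le; [|intros _; apply tail_le_ball_mass; auto].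
      pose proof (block_le_tail psi K' k psi_inH ltac:(lia)); lra.
Qed.

Lemma sum_n_far_I_pieces_le K K' s p n : 0 < p <= q -> (K <= K')%nat -> s <= 1 -> tail psi K < s ->
  sum_n (fun k => (if Nat.leb K' k then block psi k * Rpower (tail psi K') (q - 1) else 0) : R) n
    <= Rpower s p.
Proof.
  intros Hp HKK' Hs HtailK.
  rewrite (sum_n_ext _ (fun k => (if Nat.leb K' k then block psi k else 0) * Rpower (tail psi K') (q - 1)))
    by (intros k; destruct Nat.leb; lra).
  rewrite sum_n_Rmult_r; apply Rle_trans with (tail psi K' * Rpower (tail psi K') (q - 1)).
  - apply Rmult_le_compat_r; [left; apply exp_pos|]; rewrite <- tail_indicator.
    apply sum_n_le_Series; [|now apply ex_series_tail_indicator].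
    intros j; destruct Nat.leb; [apply block_ge0|lra].
  - assert (tail psi K' <= tail psi K) by (apply tail_antitone; auto).
    destruct (tail_ge0 psi K') as [Htp|<-]; [|rewrite Rmult_0_l; left; apply exp_pos].
    rewrite Rpower_mult_pred by auto; apply Rpower_le_of_le_1; lra.
Qed.

Lemma Series_I_term_le_of_tail K K' s tau p : 0 < p <= q -> (K <= K')%nat ->
  kappa ^ 2 / 4 / (INR K' + 1) ^ 2 < eps -> s <= 1 -> tail psi K < s -> sqnorm psi < tau ->
  Series I_term <= INR K + tau + (INR K' + 1) * Rpower s p.
Proof.
  intros Hp HKK' HK' Hs HtailK Htau.
  apply ex_series_bounded; [apply I_term_ge0|intros n].
  eapply Rle_trans; [apply sum_n_le; intros k; apply (I_term_le_pieces K K' s p); auto|].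
  rewrite !sum_n_Rplus.
  pose proof (sum_n_indicator_lt_le K 1 n ltac:(lra)).
  pose proof (sum_n_indicator_lt_le K' (Rpower s p) n ltac:(left; apply exp_pos)).
  pose proof (sum_n_le_Series (block psi) (block_ge0 psi) n (proj2 psi_inH)).
  pose proof (sum_n_far_I_pieces_le K K' s p n Hp HKK' Hs HtailK); fold (sqnorm psi) in *; lra.
Qed.

Lemma Series_I_term_ge_of_isolated K K' a : 0 < q -> (K < K')%nat -> 0 < a ->
  (forall k j, (k < K')%nat -> j <> k -> eps <= Rabs (lambda kappa (S j) - lambda kappa (S k))) ->
  (forall k, (K <= k < K')%nat -> a < block psi k) ->
  INR (K' - K) * Rpower a q <= Series I_term.
Proof.
  intros Hq HKK' Ha Hgap Hbig.
  apply Rle_trans with (Series (fun i => I_term (K + i))); [|apply Series_shift_le, ex_series_I_term; auto; apply I_term_ge0].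
  apply Rle_trans with (sum_n (fun i => I_term (K + i)) (K' - K - 1));
    [|apply sum_n_le_Series; [intros; apply I_term_ge0|apply ex_series_incr_n, ex_series_I_term; auto]].
  apply Rle_trans with (sum_n (fun _ => Rpower a q) (K' - K - 1));
    [rewrite sum_n_const; replace (S (K' - K - 1)) with (K' - K)%nat by lia; apply Rle_refl|].
  apply sum_n_le_loc; intros i Hi.
  assert (HKi : (K <= K + i < K')%nat) by lia.
  pose proof (Hbig _ HKi) as Hb.
  rewrite I_term_isolated; [apply Rle_Rpower_l; lra| |lra].
  intros j Hj; apply Hgap; auto; lia.
Qed.

End Moments.

End BallMass.

Definition gfd_ratio (kappa : R) (psi : vec) (q eps : R) : R :=
  ln (I_mu kappa psi q eps) / ((q - 1) * ln eps).

Lemma gfd_ratio_le kappa psi q eps x : q < 1 -> 0 < eps < 1 ->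
  ln (I_mu kappa psi q eps) <= x * ((1 - q) * - ln eps) -> gfd_ratio kappa psi q eps <= x.
Proof.
  intros Hq Heps H; unfold gfd_ratio; replace ((q - 1) * ln eps) with ((1 - q) * - ln eps) by ring.
  apply Rle_div_l; [apply Rmult_lt_0_compat; [lra|now apply neg_ln_pos]|exact H].
Qed.

Lemma gfd_ratio_ge kappa psi q eps x : q < 1 -> 0 < eps < 1 ->
  x * ((1 - q) * - ln eps) <= ln (I_mu kappa psi q eps) -> x <= gfd_ratio kappa psi q eps.
Proof.
  intros Hq Heps H; unfold gfd_ratio; replace ((q - 1) * ln eps) with ((1 - q) * - ln eps) by ring.
  apply Rle_div_r; [apply Rmult_lt_0_compat; [lra|now apply neg_ln_pos]|exact H].
Qed.

Lemma eps_small_enough A eta : 0 <= A -> 0 < eta ->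
  exists del, 0 < del <= 1 /\ forall eps, 0 < eps < del -> A / - ln eps <= eta.
Proof.
  intros HA Heta; assert (HAeta : 0 <= A / eta) by (apply Rdiv_le_0_compat; lra).
  exists (exp (- (A / eta))); split.
  - split; [apply exp_pos|rewrite <- exp_0; apply exp_le_compat; lra].
  - intros eps [Heps Hdel]; apply ln_increasing in Hdel; auto; rewrite ln_exp in Hdel.
    apply (Rle_div_l A eta (- ln eps)); [lra|].
    replace A with (A / eta * eta) at 1 by (field; lra); rewrite Rmult_comm; apply Rmult_le_compat_l; lra.
Qed.

Section Dimensions.

Variables (kappa : R) (psi : vec) (q : R).
Hypotheses (kappa_gt0 : 0 < kappa) (psi_inH : inH psi) (q_range : 0 < q < 1) (psi_nonzero : 0 < sqnorm psi).

Let A : R := q * Rabs (ln (sqnorm psi)) / (1 - q) + ln (2 + kappa ^ 2 / 4).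

Let ln_Lam_ge0 : 0 <= ln (2 + kappa ^ 2 / 4).
Proof. rewrite <- ln_1; apply ln_le; nra. Qed.

Let A_ge0 : 0 <= A.
Proof.
  apply Rplus_le_le_0_compat; [|exact ln_Lam_ge0].
  apply Rdiv_le_0_compat; [apply Rmult_le_pos; [lra|apply Rabs_pos]|lra].
Qed.

Lemma gfd_ratio_bounds eps : 0 < eps < 1 ->
  - (A / - ln eps) <= gfd_ratio kappa psi q eps <= / 3 + A / - ln eps.
Proof.
  intros Heps; pose proof (neg_ln_pos eps Heps) as HL.
  assert (Hlow : q * ln (sqnorm psi) <= ln (I_mu kappa psi q eps)).
  { rewrite I_mu_Series, <- ln_Rpower; apply ln_le; [apply exp_pos|].
    apply Rpower_sqnorm_le_I; auto; lra. }
  assert (Hup := ln_I_le kappa psi eps psi_inH (proj1 Heps) q (proj2 q_range) kappa_gt0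
                   (proj1 q_range) psi_nonzero (proj2 Heps)).
  rewrite <- I_mu_Series in Hup.
  assert (HA : (- (A / - ln eps)) * ((1 - q) * - ln eps) = - (q * Rabs (ln (sqnorm psi))) - (1 - q) * ln (2 + kappa ^ 2 / 4)
           /\ (/ 3 + A / - ln eps) * ((1 - q) * - ln eps)
              = q * Rabs (ln (sqnorm psi)) + (1 - q) * (ln (2 + kappa ^ 2 / 4) - ln eps / 3))
    by (unfold A; split; field; lra).
  assert (HLam : 0 <= (1 - q) * ln (2 + kappa ^ 2 / 4)) by (apply Rmult_le_pos; [lra|exact ln_Lam_ge0]).
  assert (Habs : - (q * Rabs (ln (sqnorm psi))) <= q * ln (sqnorm psi) <= q * Rabs (ln (sqnorm psi))).
  { pose proof (proj1 (Rabs_le_between (ln (sqnorm psi)) _) (Rle_refl _)).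
    rewrite Ropp_mult_distr_r; split; apply Rmult_le_compat_l; lra. }
  destruct HA as [HA1 HA2].
  split; [apply gfd_ratio_ge|apply gfd_ratio_le]; lra.
Qed.

Lemma gfd_ratio_eventually_bounded eta : 0 < eta -> exists del, 0 < del /\
  forall eps, 0 < eps < del -> - eta <= gfd_ratio kappa psi q eps <= / 3 + eta.
Proof.
  intros Heta; destruct (eps_small_enough A eta A_ge0 Heta) as [del [Hdel Hsmall]].
  exists del; split; [lra|]; intros eps Heps.
  pose proof (Hsmall eps Heps); pose proof (gfd_ratio_bounds eps ltac:(lra)); lra.
Qed.

End Dimensions.

(* [Uset kappa m] and [Vset kappa m] are the open dense sets of the residual set.  On them the
   ratio drops below [1/(m+1)], resp. rises above [1/3 - 1/(m+1)], at some scale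
   [eps < 1/(m+1)], uniformly in [q] in [[1/(m+1), 1 - 1/(m+1)]]; the conditions on [psi] are
   strict inequalities between finitely many continuous functions of [psi], hence open. *)
Definition U_params (kappa : R) (m : nat) (eps : R) (K K' : nat) (s tau : R) : Prop :=
  0 < eps < / INR (S m) /\ (K <= K')%nat /\ kappa ^ 2 / 4 / (INR K' + 1) ^ 2 < eps /\
  0 < s <= 1 /\
  INR K + tau + (INR K' + 1) * Rpower s (/ INR (S m)) <= Rpower eps (- / INR (S m) ^ 2).

Definition Uset (kappa : R) (m : nat) (psi : vec) : Prop :=
  inH psi /\ exists eps K K' s tau,
    U_params kappa m eps K K' s tau /\ tail psi K < s /\ sqnorm psi < tau.

Definition V_params (kappa : R) (m : nat) (eps : R) (K K' : nat) (a : R) : Prop :=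
  0 < eps < / INR (S m) /\ (K < K')%nat /\ 0 < a /\
  (forall k j, (k < K')%nat -> j <> k -> eps <= Rabs (lambda kappa (S j) - lambda kappa (S k))) /\
  forall q, / INR (S m) <= q <= 1 - / INR (S m) ->
    (1 - q) * (/ 3 - / INR (S m)) * - ln eps <= ln (INR (K' - K)) + q * ln a.

Definition Vset (kappa : R) (m : nat) (psi : vec) : Prop :=
  inH psi /\ exists eps K K' a,
    V_params kappa m eps K K' a /\ forall k, (K <= k < K')%nat -> a < block psi k.

Lemma INR_S_ge1 m : 1 <= INR (S m).
Proof. rewrite S_INR; pose proof (pos_INR m); lra. Qed.

Lemma inv_INR_S_le1 m : / INR (S m) <= 1.
Proof. rewrite <- Rinv_1; apply Rinv_le_contravar; [lra|apply INR_S_ge1]. Qed.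

Lemma Uset_open kappa m : openH (Uset kappa m).
Proof.
  split; [now intros v [Hv _]|].
  intros v [Hv [eps [K [K' [s [tau [Hpar [Htail Htau]]]]]]]].
  destruct (stable_near_and v _ _ (stable_near_tail_lt v K s Hv Htail) (stable_near_tail_lt v 0 tau Hv Htau))
    as [eta [Heta Hnear]].
  exists eta; split; auto; intros w Hw Hd; destruct (Hnear w Hw Hd).
  split; auto; exists eps, K, K', s, tau; auto.
Qed.

Lemma Vset_open kappa m : openH (Vset kappa m).
Proof.
  split; [now intros v [Hv _]|].
  intros v [Hv [eps [K [K' [a [Hpar Hbig]]]]]].
  destruct (stable_near_forall_lt v (fun k w => (K <= k)%nat -> a < block w k) K') as [eta [Heta Hnear]].
  { intros k Hk; destruct (Nat.le_gt_cases K k) as [HKk|HkK].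
    - destruct (stable_near_block_gt v k a Hv (Hbig k (conj HKk Hk))) as [eta [Heta H]].
      exists eta; split; auto.
    - exists 1; split; [lra|]; intros; lia. }
  exists eta; split; auto; intros w Hw Hd.
  split; auto; exists eps, K, K', a; split; auto; intros k Hk; apply (Hnear w Hw Hd); lia.
Qed.

Lemma Uset_gfd_ratio_small kappa m psi q : Uset kappa m psi -> / INR (S m) <= q <= 1 - / INR (S m) ->
  exists eps, 0 < eps < / INR (S m) /\ gfd_ratio kappa psi q eps <= / INR (S m).
Proof.
  intros [Hpsi [eps [K [K' [s [tau [[Heps [HKK' [HK' [Hs Hnum]]]] [Htail Htau]]]]]]]] Hq.
  pose proof (inv_INR_S_le1 m); set (N := INR (S m)) in *.
  assert (HN : 0 < / N) by (apply Rinv_0_lt_compat; pose proof (INR_S_ge1 m); unfold N; lra).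
  exists eps; split; auto; apply gfd_ratio_le; [lra|lra|].
  assert (HL : 0 < - ln eps) by (apply neg_ln_pos; lra).
  pose proof (Series_I_term_le_of_tail kappa psi eps Hpsi (proj1 Heps) q ltac:(lra) K K' s tau (/ N)
                ltac:(lra) HKK' HK' (proj2 Hs) Htail Htau) as HI.
  rewrite <- I_mu_Series in HI.
  eapply Rle_trans; [apply ln_le_of_ge1; [eapply Rle_trans; [exact HI|exact Hnum]|]|].
  - unfold Rpower; rewrite <- exp_0; apply exp_le_compat.
    assert (0 <= / N ^ 2) by (left; apply Rinv_0_lt_compat, pow_lt; pose proof (INR_S_ge1 m); unfold N; lra).
    nra.
  - rewrite ln_Rpower; replace (/ N ^ 2) with (/ N * / N) by (field; pose proof (INR_S_ge1 m); unfold N; lra).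
    assert (/ N * (- ln eps) <= (1 - q) * - ln eps) by (apply Rmult_le_compat_r; lra).
    nra.
Qed.

Lemma Vset_gfd_ratio_large kappa m psi q : Vset kappa m psi -> / INR (S m) <= q <= 1 - / INR (S m) ->
  exists eps, 0 < eps < / INR (S m) /\ / 3 - / INR (S m) <= gfd_ratio kappa psi q eps.
Proof.
  intros [Hpsi [eps [K [K' [a [[Heps [HKK' [Ha [Hgap Hnum]]]] Hbig]]]]]] Hq.
  pose proof (inv_INR_S_le1 m); set (N := INR (S m)) in *.
  assert (HN : 0 < / N) by (apply Rinv_0_lt_compat; pose proof (INR_S_ge1 m); unfold N; lra).
  exists eps; split; auto; apply gfd_ratio_ge; [lra|lra|].
  pose proof (Series_I_term_ge_of_isolated kappa psi eps Hpsi (proj1 Heps) q ltac:(lra) K K' a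
                ltac:(lra) HKK' Ha Hgap Hbig) as HI.
  rewrite <- I_mu_Series in HI.
  assert (HK : 0 < INR (K' - K)) by (apply lt_0_INR; lia).
  apply ln_le in HI; [|apply Rmult_lt_0_compat; auto; apply exp_pos].
  rewrite ln_mult, ln_Rpower in HI by (auto; apply exp_pos).
  specialize (Hnum q Hq); lra.
Qed.

Lemma Vset_sqnorm_pos kappa m psi : Vset kappa m psi -> 0 < sqnorm psi.
Proof.
  intros [Hpsi [eps [K [K' [a [[_ [HKK' [Ha _]]] Hbig]]]]]].
  pose proof (Hbig K ltac:(lia)); pose proof (block_le_sqnorm psi K Hpsi); lra.
Qed.

(** * Density *)

Definition trunc (v : vec) (K : nat) : vec := fun n l j => if Nat.leb n K then v n l j else 0%C.

Lemma block_trunc v K k : block (trunc v K) k = if Nat.ltb k K then block v k else 0.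
Proof.
  destruct (Nat.ltb_spec k K).
  - apply (block_ext (trunc v K)); intros l j; unfold trunc; destruct (Nat.leb_spec (S k) K); [reflexivity|lia].
  - apply (block_zero (trunc v K)); intros l j; unfold trunc; destruct (Nat.leb_spec (S k) K); [lia|reflexivity].
Qed.

Lemma block_diffv_trunc v K k : block (diffv v (trunc v K)) k = if Nat.leb K k then block v k else 0.
Proof.
  destruct (Nat.leb_spec K k).
  - apply (block_ext (diffv v (trunc v K))); intros l j; unfold diffv, trunc; destruct (Nat.leb_spec (S k) K); [lia|].
    unfold Cminus; rewrite Copp_0, Cplus_0_r; reflexivity.
  - apply (block_zero (diffv v (trunc v K))); intros l j; unfold diffv, trunc.
    destruct (Nat.leb_spec (S k) K); [|lia].
    unfold Cminus; apply Cplus_opp_r.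
Qed.

Lemma inH_trunc v K : inH v -> inH (trunc v K).
Proof.
  intros [Hsupp Hex]; split.
  - intros n l j Hn; unfold trunc; destruct Nat.leb; auto.
  - apply (ex_series_le_nonneg _ (block v)); auto; intros k; rewrite block_trunc.
    pose proof (block_ge0 v k); destruct Nat.ltb; lra.
Qed.

Lemma sqnorm_trunc_le v K : inH v -> sqnorm (trunc v K) <= sqnorm v.
Proof.
  intros [_ Hex]; apply Series_le; auto; intros k; rewrite block_trunc.
  pose proof (block_ge0 v k); destruct Nat.ltb; lra.
Qed.

Lemma tail_trunc v K : tail (trunc v K) K = 0.
Proof.
  unfold tail; rewrite <- (Series_single 0 0); apply Series_ext; intros k.
  rewrite block_trunc; destruct (Nat.ltb_spec (K + k) K), (Nat.eqb k 0); lia || reflexivity.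
Qed.

Lemma distH_trunc v K : distH v (trunc v K) = sqrt (tail v K).
Proof.
  rewrite distH_sqnorm; f_equal; rewrite <- tail_indicator; apply Series_ext; intros k.
  apply block_diffv_trunc.
Qed.

Lemma exp_neg_lt_inv N c : 1 <= N -> 1 <= c -> exp (- (N ^ 2 * c)) < / N.
Proof.
  intros HN Hc; rewrite exp_Ropp; apply Rinv_lt_contravar; [apply Rmult_lt_0_compat; [lra|apply exp_pos]|].
  assert (1 <= N * c) by (rewrite <- (Rmult_1_r 1); apply Rmult_le_compat; lra).
  assert (N * 1 <= N * (N * c)) by (apply Rmult_le_compat_l; lra).
  pose proof (exp_ineq1_le (N ^ 2 * c)); replace (N ^ 2 * c) with (N * (N * c)) in * by ring; lra.
Qed.

Lemma exists_index_past Lam eps K : 0 <= Lam -> 0 < eps ->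
  exists K', (K <= K')%nat /\ Lam / (INR K' + 1) ^ 2 < eps.
Proof.
  intros HLam Heps; destruct (INR_archimed 1 (Lam / eps + INR K)) as [K' HK']; [lra|].
  rewrite Rmult_1_r in HK'; pose proof (pos_INR K'); pose proof (Rdiv_le_0_compat _ _ HLam Heps).
  exists K'; split; [apply INR_le; lra|].
  apply Rle_lt_trans with (Lam / (INR K' + 1)).
  - apply Rmult_le_compat_l; [lra|apply Rinv_le_contravar; [lra|simpl; nra]].
  - apply Rlt_div_l; [lra|]; apply Rmult_lt_reg_r with (/ eps); [now apply Rinv_0_lt_compat|].
    replace (eps * (INR K' + 1) * / eps) with (INR K' + 1) by (field; lra); pose proof (pos_INR K); lra.
Qed.

(* With [N = m + 1], [s = (K' + 2)^(-N)] gives [(K' + 1) s^(1/N) <= 1] and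
   [eps = exp (-N^2 c0)] gives [eps^(-1/N^2) = exp c0 >= 1 + c0]. *)
Lemma U_params_exist kappa m K tau : 0 <= tau -> exists eps K' s, U_params kappa m eps K K' s tau.
Proof.
  intros Htau; set (N := INR (S m)); pose proof (INR_S_ge1 m) as HN; fold N in HN.
  set (c0 := INR K + tau + 1); assert (Hc0 : 1 <= c0) by (unfold c0; pose proof (pos_INR K); lra).
  set (eps := exp (- (N ^ 2 * c0))); assert (Heps : 0 < eps) by apply exp_pos.
  destruct (exists_index_past (kappa ^ 2 / 4) eps K) as [K' [HKK' HK']]; [nra|auto|].
  set (s := Rpower (INR K' + 2) (- N)).
  assert (HK'2 : 1 < INR K' + 2) by (pose proof (pos_INR K'); lra).
  exists eps, K', s; unfold U_params; fold N; repeat split; auto.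
  - now apply exp_neg_lt_inv.
  - apply exp_pos.
  - unfold s, Rpower; rewrite <- exp_0; apply exp_le_compat.
    assert (0 < ln (INR K' + 2)) by (rewrite <- ln_1; apply ln_increasing; lra); nra.
  - assert (Hs : Rpower s (/ N) = / (INR K' + 2)).
    { unfold s; rewrite Rpower_mult; replace (- N * / N) with (- (1)) by (field; lra).
      rewrite Rpower_Ropp, Rpower_1; lra. }
    assert (He : Rpower eps (- / N ^ 2) = exp c0) by (unfold eps, Rpower; rewrite ln_exp; f_equal; field; lra).
    rewrite Hs, He; pose proof (exp_ineq1_le c0); pose proof (pos_INR K').
    assert ((INR K' + 1) * / (INR K' + 2) <= 1) by (apply Rle_div_l; lra).
    unfold c0 in *; lra.
Qed.

Lemma Uset_dense kappa m : denseH (Uset kappa m).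
Proof.
  intros v Hv del Hdel.
  destruct (tail_vanishes v (del * del) Hv) as [K HK]; [nra|].
  pose proof (sqnorm_ge0 v).
  destruct (U_params_exist kappa m K (sqnorm v + 1)) as [eps [K' [s Hpar]]]; [lra|].
  exists (trunc v K); split.
  - split; [now apply inH_trunc|]; exists eps, K, K', s, (sqnorm v + 1); split; [exact Hpar|split].
    + rewrite tail_trunc; apply Hpar.
    + pose proof (sqnorm_trunc_le v K Hv); lra.
  - rewrite distH_trunc; apply sqrt_lt_of_lt_square; auto using tail_ge0.
Qed.

Definition spikev (v : vec) (K K' : nat) (al : R) : vec := fun n l j =>
  if Nat.leb n K then v n l j
  else if (Nat.leb n K' && Nat.eqb l 0 && Nat.eqb j 0)%bool then RtoC (sqrt al) else 0%C.

Lemma block_spike v K K' al k : 0 <= al ->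
  block (spikev v K K' al) k = if Nat.ltb k K then block v k else if Nat.ltb k K' then al else 0.
Proof.
  intros Hal; destruct (Nat.ltb_spec k K).
  - apply (block_ext (spikev v K K' al)); intros l j; unfold spikev.
    destruct (Nat.leb_spec (S k) K); [reflexivity|lia].
  - destruct (Nat.ltb_spec k K').
    + unfold block, spikev; rewrite sum_n_first, sum_O.
      * destruct (Nat.leb_spec (S k) K), (Nat.leb_spec (S k) K'); try lia; simpl.
        rewrite Cmod_R, Rabs_pos_eq, Rmult_1_r by apply sqrt_pos; apply sqrt_sqrt, Hal.
      * intros l Hl; transitivity (sum_n (fun _ => 0) (2 * l)); [apply sum_n_ext; intros j|apply sum_n_zero].
        destruct (Nat.leb_spec (S k) K), (Nat.eqb_spec l 0); try lia.
        rewrite Bool.andb_false_r, Bool.andb_false_l, Cmod_0; simpl; lra.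
    + apply (block_zero (spikev v K K' al)); intros l j; unfold spikev.
      destruct (Nat.leb_spec (S k) K), (Nat.leb_spec (S k) K'); try lia; reflexivity.
Qed.

Lemma inH_spike v K K' al : inH v -> 0 <= al -> inH (spikev v K K' al).
Proof.
  intros Hv Hal; split.
  - intros n l j Hn; unfold spikev; destruct (Nat.leb_spec n K); [now apply Hv|].
    destruct (Nat.leb_spec n K'), (Nat.eqb_spec l 0), (Nat.eqb_spec j 0); simpl; auto.
    exfalso; apply Hn; unfold valid_index; lia.
  - refine (proj1 (ex_series_bounded _ (block_ge0 _) (sqnorm v + INR K' * al) _)); intros n.
    apply Rle_trans with (sum_n (fun k => block v k + (if Nat.ltb k K' then al else 0)) n).
    + apply sum_n_le; intros k; rewrite block_spike by auto; pose proof (block_ge0 v k).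
      destruct Nat.ltb, Nat.ltb; lra.
    + rewrite sum_n_Rplus; pose proof (sum_n_indicator_lt_le K' al n Hal).
      pose proof (sum_n_le_Series (block v) (block_ge0 v) n (proj2 Hv)); unfold sqnorm; lra.
Qed.

Lemma sqnorm_diffv_spike_le v K K' al : inH v -> 0 <= al ->
  sqnorm (diffv v (spikev v K K' al)) <= 2 * tail v K + 2 * (INR K' * al).
Proof.
  intros Hv Hal.
  refine (proj2 (ex_series_bounded _ (block_ge0 _) _ _)); intros n.
  apply Rle_trans with
    (sum_n (fun k => 2 * (if Nat.leb K k then block v k else 0) + 2 * (if Nat.ltb k K' then al else 0)) n).
  - apply sum_n_le; intros k; destruct (Nat.leb_spec K k).
    + eapply Rle_trans; [apply block_diffv_le|].
      rewrite block_spike by auto; destruct (Nat.ltb_spec k K); [lia|]; destruct Nat.ltb; lra.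
    + rewrite (block_zero (diffv v (spikev v K K' al))); [destruct Nat.ltb; lra|].
      intros l j; unfold diffv, spikev; destruct (Nat.leb_spec (S k) K); [|lia].
      unfold Cminus; apply Cplus_opp_r.
  - rewrite sum_n_Rplus, !sum_n_Rmult_l; apply Rplus_le_compat; apply Rmult_le_compat_l; try lra.
    + rewrite <- tail_indicator; apply sum_n_le_Series; [|now apply ex_series_tail_indicator].
      intros j; destruct Nat.leb; [apply block_ge0|lra].
    + now apply sum_n_indicator_lt_le.
Qed.

(* [Lx], [Ld], [lc], [lLam] stand for [ln X], [ln (K' - K)], [ln c], [ln Lam], where [X = K' + 1],
   [- ln eps = 3 ln X - ln Lam] and [ln a = ln c - ln X] in [V_params_exist] below. *)
Lemma V_exponent_ineq t q Lx Ld lc lLam : 0 < t <= 1 -> t <= q <= 1 - t ->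
  ln 2 + Rabs lc + Rabs lLam <= t * t * Lx -> Lx - ln 2 <= Ld ->
  (1 - q) * (/ 3 - t) * (3 * Lx - lLam) <= Ld + q * (lc - Lx).
Proof.
  intros Ht Hq HE HLd.
  assert (Hln2 : 0 < ln 2) by (rewrite <- ln_1; apply ln_increasing; lra).
  pose proof (Rabs_pos lc); pose proof (Rabs_pos lLam).
  assert (HLx : 0 <= Lx) by (assert (0 < t * t) by nra; nra).
  assert (Hcoef : Rabs ((1 - q) * (/ 3 - t)) <= 1).
  { rewrite Rabs_mult; apply Rle_trans with (1 * 1); [|lra].
    apply Rmult_le_compat; try apply Rabs_pos; apply Rabs_le; lra. }
  assert (HLam : - ((1 - q) * (/ 3 - t) * lLam) <= Rabs lLam).
  { eapply Rle_trans; [apply Rle_abs|]; rewrite Rabs_Ropp, Rabs_mult.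
    pose proof (Rmult_le_compat_r _ _ _ (Rabs_pos lLam) Hcoef); lra. }
  assert (Hc : - Rabs lc <= q * lc).
  { pose proof (Rle_abs (- lc)); rewrite Rabs_Ropp in *.
    destruct (Rle_dec 0 lc); [assert (0 <= q * lc) by (apply Rmult_le_pos; lra); lra|nra]. }
  assert (t * t * Lx <= (1 - q) * t * Lx) by (apply Rmult_le_compat_r; [|apply Rmult_le_compat_r]; lra).
  lra.
Qed.

(* [eps = Lam / (K' + 1)^3] is below the gaps of the first [K'] eigenvalues, [a = c / (K' + 1)]. *)
Lemma V_params_exist kappa m K c : 0 < kappa -> 0 < c ->
  exists eps K' a, V_params kappa m eps K K' a /\ INR K' * a < c.
Proof.
  intros Hk Hc; set (N := INR (S m)); pose proof (INR_S_ge1 m) as HN; fold N in HN.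
  set (t := / N); assert (Ht : 0 < t <= 1) by (split; [apply Rinv_0_lt_compat; lra|apply inv_INR_S_le1]).
  assert (HtN : t * N = 1) by (unfold t; field; lra).
  set (Lam := kappa ^ 2 / 4); assert (HLam : 0 < Lam) by (unfold Lam; nra).
  set (E := ln 2 + Rabs (ln c) + Rabs (ln Lam)).
  destruct (INR_archimed 1 (2 * INR K + 1 + Lam * N + exp (N * N * E))) as [K' HK']; [lra|].
  rewrite Rmult_1_r in HK'; pose proof (pos_INR K); pose proof (exp_pos (N * N * E)).
  assert (HLN : 0 <= Lam * N) by nra.
  set (X := INR K' + 1); assert (HX : 1 <= X) by (unfold X; lra).
  assert (HXLam : Lam * N < X) by (unfold X; lra).
  exists (Lam / X ^ 3), K', (c / X); unfold V_params; fold N t; repeat split.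
  - apply Rdiv_lt_0_compat; [lra|apply pow_lt; lra].
  - apply Rlt_div_l; [apply pow_lt; lra|].
    replace Lam with (Lam * N * t) by (rewrite Rmult_assoc, (Rmult_comm N), HtN; ring).
    assert (X <= X ^ 3) by (simpl; nra).
    rewrite (Rmult_comm t); apply Rmult_lt_compat_r; lra.
  - apply INR_lt; unfold X in *; lra.
  - apply Rdiv_lt_0_compat; lra.
  - intros k j Hk' Hj; apply lambda_gap; auto.
  - intros q Hq.
    assert (HlnX : N * N * E <= ln X) by (rewrite <- (ln_exp (N * N * E)); apply ln_le; [apply exp_pos|unfold X; lra]).
    replace (- ln (Lam / X ^ 3)) with (3 * ln X - ln Lam)
      by (unfold Rdiv; rewrite ln_mult, ln_Rinv, ln_pow by (try apply Rinv_0_lt_compat; try apply pow_lt; lra); simpl; ring).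
    replace (ln (c / X)) with (ln c - ln X) by (unfold Rdiv; rewrite ln_mult, ln_Rinv by (try apply Rinv_0_lt_compat; lra); ring).
    apply V_exponent_ineq; auto.
    + apply Rle_trans with (t * t * (N * N * E)); [|apply Rmult_le_compat_l; [nra|exact HlnX]].
      replace (t * t * (N * N * E)) with ((t * N) * (t * N) * E) by ring; rewrite HtN; unfold E; lra.
    + assert (Hhalf : X / 2 <= INR (K' - K)) by (rewrite minus_INR by (apply INR_le; unfold X in *; lra); unfold X in *; lra).
      apply ln_le in Hhalf; [|unfold Rdiv; apply Rmult_lt_0_compat; lra].
      unfold Rdiv in Hhalf; rewrite ln_mult, ln_Rinv in Hhalf by lra; lra.
  - unfold Rdiv; rewrite <- Rmult_assoc; apply Rlt_div_l; [lra|]; unfold X; nra.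
Qed.

Lemma Vset_dense kappa m : 0 < kappa -> denseH (Vset kappa m).
Proof.
  intros Hk v Hv del Hdel.
  destruct (tail_vanishes v (del * del / 4) Hv) as [K HK]; [nra|].
  destruct (V_params_exist kappa m K (del * del / 8) Hk) as [eps [K' [a [Hpar HKa]]]]; [nra|].
  assert (Ha : 0 < a) by apply Hpar.
  exists (spikev v K K' (2 * a)); split.
  - split; [apply inH_spike; auto; lra|]; exists eps, K, K', a; split; auto.
    intros k Hk'; rewrite block_spike by lra.
    destruct (Nat.ltb_spec k K), (Nat.ltb_spec k K'); lia || lra.
  - rewrite distH_sqnorm; apply sqrt_lt_of_lt_square; auto using sqnorm_ge0.
    pose proof (sqnorm_diffv_spike_le v K K' (2 * a) Hv ltac:(lra)); nra.
Qed.

Lemma Rbar_le_of_forall_lt (x : Rbar) a : (forall eta, 0 < eta -> Rbar_le x (a + eta)) -> Rbar_le x a.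
Proof.
  intros H; destruct x as [r| |]; simpl in *; auto; [|apply (H 1); lra].
  destruct (Rle_dec r a) as [|Hra]; auto; specialize (H ((r - a) / 2)); simpl in H; lra.
Qed.

Lemma Rbar_ge_of_forall_lt (x : Rbar) a : (forall eta, 0 < eta -> Rbar_le (a - eta) x) -> Rbar_le a x.
Proof.
  intros H; destruct x as [r| |]; simpl in *; auto; [|apply (H 1); lra].
  destruct (Rle_dec a r) as [|Hra]; auto; specialize (H ((a - r) / 2)); simpl in H; lra.
Qed.

Lemma liminf0_eq (f : R -> R) a :
  (forall eta, 0 < eta -> exists del, 0 < del /\ forall eps, 0 < eps < del -> a - eta <= f eps) ->
  (forall eta del, 0 < eta -> 0 < del -> exists eps, 0 < eps < del /\ f eps <= a + eta) ->
  liminf0 f = Finite a.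
Proof.
  intros Hev Hfreq; apply Rbar_is_lub_unique; split.
  - intros y [del [Hdel ->]]; apply Rbar_le_of_forall_lt; intros eta Heta.
    destruct (Hfreq eta del Heta Hdel) as [eps [Heps Hf]].
    eapply Rbar_le_trans; [apply (proj1 (proj2_sig (Rbar_ex_glb _))); now exists eps|exact Hf].
  - intros b Hb; apply Rbar_ge_of_forall_lt; intros eta Heta.
    destruct (Hev eta Heta) as [del [Hdel Hf]].
    eapply Rbar_le_trans; [|apply Hb; now exists del].
    apply (proj2 (proj2_sig (Rbar_ex_glb _))); intros z [eps [Heps ->]]; exact (Hf eps Heps).
Qed.

Lemma limsup0_eq (f : R -> R) a :
  (forall eta, 0 < eta -> exists del, 0 < del /\ forall eps, 0 < eps < del -> f eps <= a + eta) ->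
  (forall eta del, 0 < eta -> 0 < del -> exists eps, 0 < eps < del /\ a - eta <= f eps) ->
  limsup0 f = Finite a.
Proof.
  intros Hev Hfreq; apply Rbar_is_glb_unique; split.
  - intros y [del [Hdel ->]]; apply Rbar_ge_of_forall_lt; intros eta Heta.
    destruct (Hfreq eta del Heta Hdel) as [eps [Heps Hf]].
    apply Rbar_le_trans with (Finite (f eps)); [exact Hf|].
    apply (proj1 (proj2_sig (Rbar_ex_lub _))); now exists eps.
  - intros b Hb; apply Rbar_le_of_forall_lt; intros eta Heta.
    destruct (Hev eta Heta) as [del [Hdel Hf]].
    eapply Rbar_le_trans; [apply Hb; now exists del|].
    apply (proj2 (proj2_sig (Rbar_ex_lub _))); intros z [eps [Heps ->]]; exact (Hf eps Heps).
Qed.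

(** * The residual set *)

Lemma exists_inv_INR_S_small q eta : 0 < q < 1 -> 0 < eta ->
  exists m, / INR (S m) <= q <= 1 - / INR (S m) /\ / INR (S m) < eta.
Proof.
  intros Hq Heta.
  pose proof (Rinv_0_lt_compat q (proj1 Hq)); pose proof (Rinv_0_lt_compat (1 - q) ltac:(lra)).
  pose proof (Rinv_0_lt_compat eta Heta).
  destruct (INR_archimed 1 (/ q + / (1 - q) + / eta)) as [m Hm]; [lra|]; rewrite Rmult_1_r in Hm.
  assert (Hinv : forall y, 0 < y -> / y <= INR m -> / INR (S m) < y).
  { intros y Hy Hym; rewrite <- (Rinv_inv y); rewrite S_INR.
    apply Rinv_lt_contravar; [apply Rmult_lt_0_compat; [apply Rinv_0_lt_compat|]; auto|]; lra. }
  exists m; split; [split|]; [left; apply Hinv; lra| |apply Hinv; lra].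
  assert (/ INR (S m) < 1 - q) by (apply Hinv; lra); lra.
Qed.

Definition Wset (kappa : R) (k : nat) : vec -> Prop :=
  if Nat.even k then Uset kappa (Nat.div2 k) else Vset kappa (Nat.div2 k).

Definition residual (kappa : R) (v : vec) : Prop := inH v /\ forall k, Wset kappa k v.

Lemma residual_generic kappa : 0 < kappa -> genericH (residual kappa).
Proof.
  intros Hk; exists (Wset kappa); split; [|reflexivity].
  intros k; unfold Wset; destruct (Nat.even k).
  - split; [apply Uset_open|apply Uset_dense].
  - split; [apply Vset_open|now apply Vset_dense].
Qed.

Lemma residual_Uset kappa v m : residual kappa v -> Uset kappa m v.
Proof.
  intros [_ HW]; specialize (HW (2 * m)%nat); unfold Wset in HW.
  now rewrite Nat.even_even, Nat.div2_double in HW.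
Qed.

Lemma residual_Vset kappa v m : residual kappa v -> Vset kappa m v.
Proof.
  intros [_ HW]; specialize (HW (2 * m + 1)%nat); unfold Wset in HW.
  now rewrite Nat.even_odd, Nat.div2_odd' in HW.
Qed.

Lemma residual_gfd_ratio_frequently_small kappa psi q : residual kappa psi -> 0 < q < 1 ->
  forall eta del, 0 < eta -> 0 < del -> exists eps, 0 < eps < del /\ gfd_ratio kappa psi q eps <= 0 + eta.
Proof.
  intros Hpsi Hq eta del Heta Hdel.
  destruct (exists_inv_INR_S_small q (Rmin eta del) Hq) as [m [Hqm Hm]]; [now apply Rmin_pos|].
  destruct (Uset_gfd_ratio_small kappa m psi q (residual_Uset kappa psi m Hpsi) Hqm) as [eps [Heps Hf]].
  pose proof (Rmin_l eta del); pose proof (Rmin_r eta del); exists eps; split; lra.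
Qed.

Lemma residual_gfd_ratio_frequently_large kappa psi q : residual kappa psi -> 0 < q < 1 ->
  forall eta del, 0 < eta -> 0 < del -> exists eps, 0 < eps < del /\ / 3 - eta <= gfd_ratio kappa psi q eps.
Proof.
  intros Hpsi Hq eta del Heta Hdel.
  destruct (exists_inv_INR_S_small q (Rmin eta del) Hq) as [m [Hqm Hm]]; [now apply Rmin_pos|].
  destruct (Vset_gfd_ratio_large kappa m psi q (residual_Vset kappa psi m Hpsi) Hqm) as [eps [Heps Hf]].
  pose proof (Rmin_l eta del); pose proof (Rmin_r eta del); exists eps; split; lra.
Qed.

Theorem theorem1 (kappa : R) (hkappa : 0 < kappa) :
  exists Rset : vec -> Prop,
    genericH Rset /\
    forall psi, Rset psi ->
      forall q, 0 < q < 1 ->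
        gfd_lower kappa psi q = Finite 0 /\ gfd_upper kappa psi q = Finite (1 / 3).
Proof.
  exists (residual kappa); split; [now apply residual_generic|].
  intros psi Hpsi q Hq.
  pose proof (Vset_sqnorm_pos kappa 0 psi (residual_Vset kappa psi 0 Hpsi)) as HT.
  pose proof (gfd_ratio_eventually_bounded kappa psi q hkappa (proj1 Hpsi) Hq HT) as Hbounded.
  split.
  - apply (liminf0_eq (gfd_ratio kappa psi q)); [|now apply residual_gfd_ratio_frequently_small].
    intros eta Heta; destruct (Hbounded eta Heta) as [del [Hdel Hb]].
    exists del; split; auto; intros eps Heps; specialize (Hb eps Heps); lra.
  - replace (1 / 3) with (/ 3) by field.
    apply (limsup0_eq (gfd_ratio kappa psi q)); [|now apply residual_gfd_ratio_frequently_large].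
    intros eta Heta; destruct (Hbounded eta Heta) as [del [Hdel Hb]].
    exists del; split; auto; intros eps Heps; apply Hb, Heps.
Qed.
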